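(* In the Nakagami model with parameters $L_c>0$, $L_s>0$, the distortion exponent achievable by the joint decoding scheme with rate $R_j=\frac{r_j}{2}\log_2\rho$, $$\Delta_j(L_s,L_c):=\sup_{r_j>0}\ \lim_{\rho\to\infty}-\frac{\log ED_j\big(\tfrac{r_j}{2}\log_2\rho\big)}{\log\rho},$$ equals $$\Delta_j(L_s,L_c)=\begin{cases}1-\dfrac{(1-L_s)^2}{L_c+1-L_s}&\text{if }L_s\le1,\\[2mm] 2-\dfrac1{L_s}&\text{if }1<L_s\le1+L_c,\\[2mm] 1+\dfrac{L_c}{L_c+1}&\text{if }L_s>1+L_c.\end{cases}$$
   Context: Nakagami model: for SNR $\rho>0$, the channel gain is $H=\rho H_0$ and the side-information gain is $\Gamma=\rho\Gamma_0$, where $H_0,\Gamma_0$ are independent, $H_0$ is Gamma distributed with shape $L_c$ and scale $1/L_c$, and $\Gamma_0$ is Gamma distributed with shape $L_s$ and scale $1/L_s$ (Gamma$(L,\theta)$ density $\frac{1}{\theta^L\Gamma(L)}x^{L-1}e^{-x/\theta}$, $x\ge0$). Define $D_d(R,\gamma)=(\gamma+2^{2R})^{-1}$. For $R_j>0$, the JDS outage set is $\mathcal O_j=\{(h,\gamma):\tfrac12\log_2(1+\tfrac{2^{2R_j}-1}{\gamma+1})\ge\tfrac12\log_2(1+h)\}$ and $ED_j(R_j)=\mathrm E[D_d(R_j,\Gamma)\mathbf 1\{(H,\Gamma)\notin\mathcal O_j\}]+\mathrm E[D_d(0,\Gamma)\mathbf 1\{(H,\Gamma)\in\mathcal O_j\}]$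 (a function of $\rho$ through $H,\Gamma$). *)

From Stdlib Require Import Reals Lra ClassicalEpsilon.
Open Scope R_scope.

(* Total version of the (proper) Riemann integral on [a,b]:
   value of RiemannInt when f is Riemann integrable, 0 otherwise.
   (RiemannInt does not depend on the integrability proof.) *)
Definition RI (f : R -> R) (a b : R) : R :=
  match excluded_middle_informative (inhabited (Riemann_integrable f a b)) with
  | left h => RiemannInt (epsilon h (fun _ => True))
  | right _ => 0
  end.

Definition improper_int_0_inf (f : R -> R) (l : R) : Prop :=
  forall eps : R, 0 < eps ->
    exists delta M : R, 0 < delta /\
      forall a b : R, 0 < a < delta -> M < b -> Rabs (RI f a b - l) < eps.

(* Total improper integral over (0,+oo) (0 if it does not converge). *)
Definition Iinf (f : R -> R) : R :=
  epsilon (inhabits 0) (fun l => improper_int_0_inf f l).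

Definition GammaF (L : R) : R := Iinf (fun x => Rpower x (L - 1) * exp (- x)).

Definition gamma_pdf (L theta x : R) : R :=
  / (Rpower theta L * GammaF L) * Rpower x (L - 1) * exp (- x / theta).

Definition log2 (x : R) : R := ln x / ln 2.

Definition Dd (Rt g : R) : R := / (g + Rpower 2 (2 * Rt)).

Definition outage (Rj h g : R) : Prop :=
  / 2 * log2 (1 + (Rpower 2 (2 * Rj) - 1) / (g + 1)) >= / 2 * log2 (1 + h).

Definition ind_out (Rj h g : R) : R :=
  if Rge_dec (/ 2 * log2 (1 + (Rpower 2 (2 * Rj) - 1) / (g + 1))) (/ 2 * log2 (1 + h))
  then 1 else 0.

(* Expectation of F(H, Gamma) with H = rho*H0, Gamma = rho*Gamma0,
   H0 ~ Gamma(Lc, 1/Lc), Gamma0 ~ Gamma(Ls, 1/Ls) independent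
   (iterated improper integral over the product density). *)
Definition Expect (Lc Ls rho : R) (F : R -> R -> R) : R :=
  Iinf (fun h0 => gamma_pdf Lc (/ Lc) h0 *
     Iinf (fun g0 => gamma_pdf Ls (/ Ls) g0 * F (rho * h0) (rho * g0))).

Definition EDj (Lc Ls rho Rj : R) : R :=
  Expect Lc Ls rho (fun h g => Dd Rj g * (1 - ind_out Rj h g))
  + Expect Lc Ls rho (fun h g => Dd 0 g * ind_out Rj h g).

Definition lim_infty (f : R -> R) (d : R) : Prop :=
  forall eps : R, 0 < eps -> exists M : R, forall rho : R, M < rho -> Rabs (f rho - d) < eps.

Definition exponent_fun (Lc Ls r : R) : R -> R :=
  fun rho => - ln (EDj Lc Ls rho (r / 2 * log2 rho)) / ln rho.

Definition Delta_j (Ls Lc : R) : R :=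
  if Rle_dec Ls 1 then 1 - (1 - Ls) ^ 2 / (Lc + 1 - Ls)
  else if Rle_dec Ls (1 + Lc) then 2 - / Ls
  else 1 + Lc / (Lc + 1).

(** Write [ED_j] at rate [R_j = r/2 log2 rho] as an iterated integral over the channel
    gain [h = H0] and the side-information gain [g = Gamma0].  Outage happens exactly when
    [g <= phi rho r h] for an explicit threshold [phi], so
      [ED_j = Iinf O1 + Iinf O2],
    where [O1 h] (no outage) and [O2 h] (outage) are [h]-densities built from the
    truncated integrals [Gt q t = int_0^t q] of the side-information density weighted by
    [1/(rho g + rho^r)], resp. [1/(rho g + 1)].

    Then
    - upper bounds: pointwise weighted-mean inequalities give [Iinf O1 = O(rho^-a)] and
      [Iinf O2 = O(rho^-b)] for families of exponents approaching [e1 r] and [e2 r];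
    - lower bounds: integrating over dyadic boxes [[x/2,x] x [y/2,y]] with [x, y] powers
      of [rho] gives [Iinf O1 >= c rho^-(e1 r)] (for [r < 2]) and [Iinf O2 >= c rho^-(e2 r)].
    Hence the exponent at rate [r] is [ee r = min (e1 r) (e2 r)]; an elementary
    optimization over [r > 0] shows [sup_r ee r = max_r ee r = Delta_j Ls Lc]. *)

From Stdlib Require Import Reals Lra ClassicalEpsilon Classical FunctionalExtensionality PropExtensionality.
From Coquelicot Require Import Coquelicot.
Open Scope R_scope.

Lemma RI_RInt f a b : ex_RInt f a b -> RI f a b = RInt f a b.
Proof.
  intro H. unfold RI. destruct excluded_middle_informative as [h|h].
  - rewrite (RInt_Reals f a b (epsilon h (fun _ => True))). reflexivity.
  - exfalso. apply h. constructor. apply ex_RInt_Reals_0. exact H.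
Qed.

Lemma improper_unique f l l' :
  improper_int_0_inf f l -> improper_int_0_inf f l' -> l = l'.
Proof.
  intros H1 H2. apply Rminus_diag_uniq. apply Rabs_eq_0.
  destruct (Rle_lt_dec (Rabs (l - l')) 0) as [h|h].
  { apply Rle_antisym; [exact h| apply Rabs_pos]. }
  exfalso. set (e := Rabs (l - l') / 3).
  destruct (H1 e ltac:(unfold e; lra)) as [d1 [M1 [Hd1 P1]]].
  destruct (H2 e ltac:(unfold e; lra)) as [d2 [M2 [Hd2 P2]]].
  set (a := Rmin d1 d2 / 2). set (b := Rmax M1 M2 + 1).
  assert (Hm0 : 0 < Rmin d1 d2) by (apply Rmin_glb_lt; lra).
  assert (Ha1 := Rmin_l d1 d2). assert (Ha2 := Rmin_r d1 d2).
  assert (Hb1 := Rmax_l M1 M2). assert (Hb2 := Rmax_r M1 M2).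
  specialize (P1 a b ltac:(unfold a; lra) ltac:(unfold b; lra)).
  specialize (P2 a b ltac:(unfold a; lra) ltac:(unfold b; lra)).
  assert (Rabs (l - l') <= Rabs (RI f a b - l) + Rabs (RI f a b - l')).
  { replace (l - l') with (-(RI f a b - l) + (RI f a b - l')) by ring.
    eapply Rle_trans; [apply Rabs_triang|]. rewrite Rabs_Ropp. lra. }
  unfold e in *. lra.
Qed.

Lemma Iinf_spec f l : improper_int_0_inf f l -> Iinf f = l.
Proof.
  intro H. unfold Iinf. apply (improper_unique f); [|exact H].
  apply epsilon_spec. exists l; exact H.
Qed.

Definition pos_integrand (f : R -> R) :=
  (forall x, 0 < x -> 0 <= f x) /\ (forall a b, 0 < a -> a < b -> ex_RInt f a b).

Definition int_bounded (f : R -> R) (K : R) :=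
  forall a b, 0 < a -> a < b -> RInt f a b <= K.

Lemma pos_integrand_ex f a b : pos_integrand f -> 0 < a -> a <= b -> ex_RInt f a b.
Proof.
  intros [_ H] Ha Hab. destruct (Rle_lt_or_eq_dec _ _ Hab) as [h|<-].
  - apply H; auto.
  - apply ex_RInt_point.
Qed.

Lemma RInt_subinterval f a b c d : pos_integrand f -> 0 < a -> a <= c -> c <= d -> d <= b ->
  RInt f c d <= RInt f a b.
Proof.
  intros G Ha H1 H2 H3.
  rewrite <- (RInt_Chasles f a c b), <- (RInt_Chasles f c d b)
    by (apply pos_integrand_ex; auto; lra).
  assert (0 <= RInt f a c).
  { apply RInt_ge_0; [lra|apply pos_integrand_ex; auto|intros; apply G; lra]. }
  assert (0 <= RInt f d b).
  { apply RInt_ge_0; [lra|apply pos_integrand_ex; auto; lra|intros; apply G; lra]. }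
  unfold plus; simpl. lra.
Qed.

(** Monotone convergence for improper integrals: a nonnegative integrand with
    bounded partial integrals has an improper integral, namely their supremum. *)
Lemma improper_of_bounded f K : pos_integrand f -> int_bounded f K ->
  exists S, improper_int_0_inf f S /\ S <= K /\
    (forall a b, 0 < a -> a < b -> RInt f a b <= S).
Proof.
  intros G B.
  set (E := fun v => exists a b, 0 < a /\ a < b /\ v = RInt f a b).
  assert (Hbd : bound E) by (exists K; intros v [a [b [Ha [Hab ->]]]]; apply B; auto).
  assert (Hne : exists v, E v) by (exists (RInt f 1 2), 1, 2; repeat split; lra).
  destruct (completeness E Hbd Hne) as [S [HS1 HS2]].
  exists S. split; [|split].
  - intros eps Heps.
    assert (Happrox : exists a b, 0 < a /\ a < b /\ S - eps < RInt f a b).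
    { apply NNPP. intro N.
      enough (S <= S - eps) by lra.
      apply HS2. intros v [a [b [Ha [Hab ->]]]].
      apply Rnot_lt_le. intro h. apply N. exists a, b. auto. }
    destruct Happrox as [a0 [b0 [Ha0 [Hab0 Hv]]]].
    exists a0, b0. split; auto.
    intros a b Ha Hb.
    rewrite RI_RInt by (apply G; lra).
    assert (RInt f a0 b0 <= RInt f a b) by (apply RInt_subinterval; [exact G|lra..]).
    assert (RInt f a b <= S) by (apply HS1; exists a, b; repeat split; lra).
    apply Rabs_def1; lra.
  - apply HS2. intros v [a [b [Ha [Hab ->]]]]. apply B; auto.
  - intros a b Ha Hab. apply HS1. exists a, b. auto.
Qed.

Section BoundedIntegrand.
Variables (f : R -> R) (K : R).
Hypotheses (G : pos_integrand f) (B : int_bounded f K).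

Lemma Iinf_conv : improper_int_0_inf f (Iinf f).
Proof.
  destruct (improper_of_bounded f K G B) as [S [H _]]. now rewrite (Iinf_spec f S H).
Qed.

Lemma Iinf_le : Iinf f <= K.
Proof.
  destruct (improper_of_bounded f K G B) as [S [H [H' _]]]. now rewrite (Iinf_spec f S H).
Qed.

Lemma Iinf_ge a b : 0 < a -> a < b -> RInt f a b <= Iinf f.
Proof.
  destruct (improper_of_bounded f K G B) as [S [H [_ H']]]. rewrite (Iinf_spec f S H). auto.
Qed.

Lemma Iinf_nonneg : 0 <= Iinf f.
Proof.
  apply Rle_trans with (RInt f 1 2); [|apply Iinf_ge; lra].
  apply RInt_ge_0; [lra| apply G; lra| intros; apply G; lra].
Qed.

End BoundedIntegrand.

Lemma RI_ext_pos f g a b : 0 < a -> a < b -> (forall x, 0 < x -> f x = g x) ->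
  RI f a b = RI g a b.
Proof.
  intros Ha Hab E.
  assert (E' : forall x, Rmin a b < x < Rmax a b -> f x = g x).
  { intros x Hx. apply E. rewrite Rmin_left in Hx; lra. }
  assert (Ex : ex_RInt f a b <-> ex_RInt g a b).
  { split; apply ex_RInt_ext; intros; [|symmetry]; auto. }
  destruct (classic (ex_RInt f a b)) as [h|h].
  - rewrite !RI_RInt by tauto. now apply RInt_ext.
  - unfold RI. destruct excluded_middle_informative as [[i]|i].
    + exfalso. apply h, ex_RInt_Reals_1, i.
    + destruct excluded_middle_informative as [[j]|j]; auto.
      exfalso. apply h, Ex, ex_RInt_Reals_1, j.
Qed.

Lemma improper_ext_pos f g l : (forall x, 0 < x -> f x = g x) ->
  improper_int_0_inf f l -> improper_int_0_inf g l.
Proof.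
  intros E H eps Heps. destruct (H eps Heps) as [d [M [Hd P]]].
  exists d, (Rmax M d). split; auto. intros a b Ha Hb.
  assert (X1 := Rmax_l M d). assert (X2 := Rmax_r M d).
  rewrite <- (RI_ext_pos f g a b); [apply P|..]; auto; lra.
Qed.

Lemma Iinf_ext_pos f g : (forall x, 0 < x -> f x = g x) -> Iinf f = Iinf g.
Proof.
  intros E. unfold Iinf. f_equal. apply functional_extensionality. intro l.
  apply propositional_extensionality. split; apply improper_ext_pos; auto.
  intros; symmetry; auto.
Qed.

Lemma improper_minus f g l m : (forall a b, 0 < a -> a < b -> ex_RInt f a b) ->
  (forall a b, 0 < a -> a < b -> ex_RInt g a b) ->
  improper_int_0_inf f l -> improper_int_0_inf g m ->
  improper_int_0_inf (fun x => f x - g x) (l - m).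
Proof.
  intros Ef Eg H1 H2 eps Heps.
  destruct (H1 (eps/2) ltac:(lra)) as [d1 [M1 [Hd1 P1]]].
  destruct (H2 (eps/2) ltac:(lra)) as [d2 [M2 [Hd2 P2]]].
  set (d := Rmin d1 d2).
  assert (Hd : 0 < d) by (apply Rmin_glb_lt; lra).
  assert (X1 := Rmin_l d1 d2). assert (X2 := Rmin_r d1 d2).
  assert (X3 := Rmax_l M1 M2). assert (X4 := Rmax_r M1 M2).
  assert (X5 := Rmax_l (Rmax M1 M2) d). assert (X6 := Rmax_r (Rmax M1 M2) d).
  exists d, (Rmax (Rmax M1 M2) d). split; auto. intros a b Ha Hb.
  assert (Eab : ex_RInt f a b /\ ex_RInt g a b) by (split; [apply Ef|apply Eg]; unfold d in *; lra).
  specialize (P1 a b ltac:(unfold d in *; lra) ltac:(lra)).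
  specialize (P2 a b ltac:(unfold d in *; lra) ltac:(lra)).
  rewrite RI_RInt in P1, P2 |- * by (try apply (ex_RInt_minus f g); tauto).
  rewrite (RInt_minus f g a b (proj1 Eab) (proj2 Eab)
    : RInt (fun x => f x - g x) a b = RInt f a b - RInt g a b).
  apply Rabs_def2 in P1. apply Rabs_def2 in P2. apply Rabs_def1; lra.
Qed.

Lemma exp_le_mono x y : x <= y -> exp x <= exp y.
Proof. intros [h|<-]; [left; apply exp_increasing; auto| lra]. Qed.

Lemma ex_derive_cont (f : R -> R) x : ex_derive f x -> continuous f x.
Proof. apply (ex_derive_continuous (K:=R_AbsRing) (V:=R_NormedModule)). Qed.

Lemma ex_RInt_cont_pos (f : R -> R) a b : 0 < a -> a <= b ->
  (forall x, 0 < x -> continuous f x) -> ex_RInt f a b.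
Proof.
  intros Ha Hab C. apply (ex_RInt_continuous (V:=R_CompleteNormedModule)). intros z Hz.
  rewrite Rmin_left in Hz by auto. apply C; lra.
Qed.

Lemma Rpower_pos x y : 0 < Rpower x y.
Proof. apply exp_pos. Qed.

Lemma Rpower_le_base_neg x y s : 0 < x -> x <= y -> s <= 0 -> Rpower y s <= Rpower x s.
Proof.
  intros Hx Hxy Hs. apply exp_le_mono.
  assert (ln x <= ln y) by (apply ln_le; auto). nra.
Qed.

Lemma Rpower_1_base s : Rpower 1 s = 1.
Proof. unfold Rpower. rewrite ln_1, Rmult_0_r. apply exp_0. Qed.

Lemma Rpower_inv_base x s : 0 < x -> Rpower (/ x) s = / Rpower x s.
Proof.
  intros Hx. unfold Rpower. rewrite ln_Rinv by auto.
  replace (s * - ln x) with (- (s * ln x)) by ring. apply exp_Ropp.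
Qed.

Lemma Rpower_succ x s : 0 < x -> Rpower x s = x * Rpower x (s - 1).
Proof.
  intros. replace s with (1 + (s - 1)) at 1 by ring. rewrite Rpower_plus, Rpower_1; auto.
Qed.

Lemma Rpower_ge_1 rho a : 1 <= rho -> 0 <= a -> 1 <= Rpower rho a.
Proof. intros. rewrite <- (Rpower_1_base a). apply Rle_Rpower_l; lra. Qed.

Lemma Rpower_le_1 rho a : 1 <= rho -> a <= 0 -> Rpower rho a <= 1.
Proof. intros. rewrite <- (Rpower_O rho) by lra. apply Rle_Rpower; lra. Qed.

Lemma Rpower_eventually_gt (k a : R) : 0 < a -> 0 < k ->
  exists r0, 1 <= r0 /\ forall rho, r0 < rho -> k < Rpower rho a.
Proof.
  intros Ha Hk. exists (Rmax 1 (Rpower k (/ a))). split; [apply Rmax_l|].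
  intros rho Hr. assert (X1 := Rmax_l 1 (Rpower k (/ a))). assert (X2 := Rmax_r 1 (Rpower k (/ a))).
  assert (H : Rpower (Rpower k (/ a)) a < Rpower rho a)
    by (apply Rlt_Rpower_l; [|split; [apply Rpower_pos|]]; lra).
  rewrite Rpower_mult, Rinv_l, Rpower_1 in H by lra. exact H.
Qed.

Lemma geometric_mean_le_sum x y th : 0 < x -> 0 < y -> 0 <= th <= 1 ->
  Rpower x (1 - th) * Rpower y th <= x + y.
Proof.
  intros Hx Hy Ht. set (M := Rmax x y).
  assert (HM1 := Rmax_l x y). assert (HM2 := Rmax_r x y). fold M in HM1, HM2.
  assert (A : Rpower x (1 - th) <= Rpower M (1 - th)) by (apply Rle_Rpower_l; lra).
  assert (B : Rpower y th <= Rpower M th) by (apply Rle_Rpower_l; lra).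
  assert (C : Rpower M (1 - th) * Rpower M th = M).
  { rewrite <- Rpower_plus. replace (1 - th + th) with 1 by ring. apply Rpower_1. lra. }
  assert (0 < Rpower x (1 - th)) by apply Rpower_pos.
  assert (0 < Rpower y th) by apply Rpower_pos.
  assert (Rpower x (1 - th) * Rpower y th <= M) by (rewrite <- C; apply Rmult_le_compat; lra).
  unfold M in *. destruct (Rle_dec x y); [rewrite Rmax_right in *|rewrite Rmax_left in *]; lra.
Qed.

Lemma Rpower_continuous s x : 0 < x -> continuous (fun g => Rpower g s) x.
Proof. intros. apply ex_derive_cont. unfold Rpower. auto_derive. lra. Qed.

Lemma RInt_Rpower s a b : 0 < a -> a <= b -> s <> 0 ->
  RInt (fun g => Rpower g (s - 1)) a b = (Rpower b s - Rpower a s) / s.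
Proof.
  intros Ha Hab Hs. apply is_RInt_unique.
  replace ((Rpower b s - Rpower a s) / s) with (minus (Rpower b s / s) (Rpower a s / s))
    by (unfold minus, plus, opp; simpl; field; auto).
  apply (is_RInt_derive (fun g => Rpower g s / s)); intros x Hx;
    rewrite Rmin_left in Hx by auto.
  - unfold Rpower. auto_derive; [lra|].
    replace ((s - 1) * ln x) with (s * ln x + - ln x) by ring.
    rewrite exp_plus, exp_Ropp, exp_ln by lra. field. split; lra.
  - apply Rpower_continuous; lra.
Qed.

Lemma RInt_exp_neg L a b : 0 < L ->
  RInt (fun g => exp (- (L * g))) a b = (exp (- (L * a)) - exp (- (L * b))) / L.
Proof.
  intros HL. apply is_RInt_unique.
  replace ((exp (- (L * a)) - exp (- (L * b))) / L)
    with (minus (- exp (- (L * b)) / L) (- exp (- (L * a)) / L))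
    by (unfold minus, plus, opp; simpl; field; lra).
  apply (is_RInt_derive (fun g => - exp (- (L * g)) / L)); intros x _.
  - auto_derive; auto. field. lra.
  - apply ex_derive_cont. auto_derive. auto.
Qed.

Lemma Rpower_le_exp k L : 0 < L -> exists C, 0 < C /\
  forall g, 1 <= g -> Rpower g k <= C * exp (L * g).
Proof.
  intros HL. destruct (Rle_lt_dec k 0) as [hk|hk].
  - exists 1. split; [lra|]. intros g Hg.
    assert (Rpower g k <= 1) by (apply Rpower_le_1; lra).
    assert (1 <= exp (L * g)) by (rewrite <- exp_0; apply exp_le_mono; nra).
    lra.
  - set (e := L / k). assert (He : 0 < e) by (unfold e; apply Rdiv_lt_0_compat; auto).
    exists (exp (k * (- ln e - 1))). split; [apply exp_pos|].
    intros g Hg. unfold Rpower. rewrite <- exp_plus. apply exp_le_mono.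
    assert (Hl : ln (e * g) <= e * g - 1).
    { assert (X := exp_ineq1_le (ln (e * g))). rewrite exp_ln in X; [lra|nra]. }
    rewrite ln_mult in Hl by lra.
    assert (k * e = L) by (unfold e; field; lra).
    nra.
Qed.

Lemma RInt_ge_const (f : R -> R) a b m : a <= b -> ex_RInt f a b ->
  (forall x, a < x < b -> m <= f x) -> m * (b - a) <= RInt f a b.
Proof.
  intros Hab E H.
  assert (X : RInt (fun _ => m) a b <= RInt f a b) by (apply RInt_le; auto; apply ex_RInt_const).
  rewrite RInt_const in X. change (scal (b - a) m) with ((b - a) * m) in X. lra.
Qed.

Definition gk (s L : R) (g : R) := Rpower g (s - 1) * exp (- (L * g)).

Lemma gk_pos s L x : 0 < gk s L x.
Proof. apply Rmult_lt_0_compat; [apply Rpower_pos|apply exp_pos]. Qed.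

Lemma gk_pos_integrand s L : pos_integrand (gk s L).
Proof.
  split; [intros; left; apply gk_pos|].
  intros a b Ha Hab. apply ex_RInt_cont_pos; try lra.
  intros. apply ex_derive_cont. unfold gk, Rpower. auto_derive. lra.
Qed.

Lemma gk_le_pow s L x : 0 < L -> 0 < x -> gk s L x <= Rpower x (s - 1).
Proof.
  intros HL Hx. unfold gk. assert (0 < Rpower x (s - 1)) by apply Rpower_pos.
  assert (exp (- (L * x)) <= 1) by (rewrite <- exp_0; apply exp_le_mono; nra). nra.
Qed.

Lemma int_bounded_split (f : R -> R) K1 K2 : pos_integrand f ->
  (forall a, 0 < a -> a < 1 -> RInt f a 1 <= K1) ->
  (forall b, 1 < b -> RInt f 1 b <= K2) -> 0 <= K1 -> 0 <= K2 -> int_bounded f (K1 + K2).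
Proof.
  intros G H1 H2 P1 P2 a b Ha Hab.
  destruct (Rlt_le_dec a 1) as [ha|ha]; destruct (Rle_lt_dec b 1) as [hb|hb].
  - specialize (H1 a Ha ha).
    assert (RInt f a b <= RInt f a 1) by (apply RInt_subinterval; [exact G|lra..]). lra.
  - rewrite <- (RInt_Chasles f a 1 b) by (apply pos_integrand_ex; auto; lra).
    specialize (H1 a Ha ha). specialize (H2 b hb). unfold plus; simpl. lra.
  - lra.
  - specialize (H2 b hb).
    assert (RInt f a b <= RInt f 1 b) by (apply RInt_subinterval; [exact G|lra..]). lra.
Qed.

(** [gk s L] is integrable on (0,+oo) when [s, L > 0]: compare with [g^(s-1)] near 0
    and with [C e^(-L g/2)] near infinity. *)
Lemma gk_int_bounded s L : 0 < s -> 0 < L -> exists J, 0 <= J /\ int_bounded (gk s L) J.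
Proof.
  intros Hs HL.
  destruct (Rpower_le_exp (s - 1) (L / 2) ltac:(lra)) as [C [HC HCb]].
  assert (Hs' : 0 < / s) by (apply Rinv_0_lt_compat; lra).
  exists (/ s + C * (2 / L)).
  assert (HL' : 0 < 2 / L) by (apply Rdiv_lt_0_compat; lra).
  split; [nra|]. apply int_bounded_split; [apply gk_pos_integrand| | |lra|nra].
  - intros a Ha Ha1.
    assert (H : RInt (gk s L) a 1 <= RInt (fun g => Rpower g (s - 1)) a 1).
    { apply RInt_le; try lra.
      - apply (gk_pos_integrand s L); lra.
      - apply ex_RInt_cont_pos; try lra. intros; apply Rpower_continuous; auto.
      - intros x Hx. apply gk_le_pow; lra. }
    rewrite RInt_Rpower, Rpower_1_base in H by lra.
    assert (0 < Rpower a s) by apply Rpower_pos.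
    assert ((1 - Rpower a s) / s <= / s) by (unfold Rdiv; nra).
    lra.
  - intros b Hb.
    assert (H : RInt (gk s L) 1 b <= RInt (fun g => C * exp (- ((L / 2) * g))) 1 b).
    { apply RInt_le; try lra.
      - apply (gk_pos_integrand s L); lra.
      - apply ex_RInt_cont_pos; try lra. intros; apply ex_derive_cont; auto_derive; auto.
      - intros x Hx. unfold gk. specialize (HCb x ltac:(lra)).
        replace (C * exp (- (L / 2 * x))) with (C * exp (L / 2 * x) * exp (- (L * x)))
          by (rewrite Rmult_assoc, <- exp_plus; do 2 f_equal; field).
        apply Rmult_le_compat_r; [left; apply exp_pos|lra]. }
    assert (Ex : ex_RInt (fun g => exp (- ((L / 2) * g))) 1 b)
      by (apply ex_RInt_cont_pos; try lra; intros; apply ex_derive_cont; auto_derive; auto).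
    rewrite (RInt_scal _ 1 b C Ex : RInt (fun g => C * _) 1 b = C * _), RInt_exp_neg in H
      by lra.
    assert (0 < exp (- (L / 2 * b))) by apply exp_pos.
    assert (exp (- (L / 2 * 1)) <= 1) by (rewrite Rmult_1_r, <- exp_0; apply exp_le_mono; lra).
    replace ((exp (- (L / 2 * 1)) - exp (- (L / 2 * b))) / (L / 2))
      with ((exp (- (L / 2 * 1)) - exp (- (L / 2 * b))) * (2 / L)) in H by (field; lra).
    assert ((exp (- (L / 2 * 1)) - exp (- (L / 2 * b))) * (2 / L) <= 2 / L) by nra.
    assert (C * ((exp (- (L / 2 * 1)) - exp (- (L / 2 * b))) * (2 / L)) <= C * (2 / L))
      by (apply Rmult_le_compat_l; lra).
    lra.
Qed.

Lemma int_bounded_le (f g : R -> R) k K : pos_integrand f -> pos_integrand g ->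
  (forall x, 0 < x -> f x <= k * g x) -> 0 <= k -> int_bounded g K -> int_bounded f (k * K).
Proof.
  intros Gf Gg H Hk B a b Ha Hab.
  apply Rle_trans with (RInt (fun x => k * g x) a b).
  - apply RInt_le; try lra; [apply Gf; auto|apply (ex_RInt_scal g); apply Gg; auto|].
    intros x Hx; apply H; lra.
  - rewrite (RInt_scal g a b k ltac:(apply Gg; auto) : RInt (fun x => k * g x) a b = k * _).
    apply Rmult_le_compat_l; auto.
Qed.

(** On [x/2, x] the power [g^(L-1)] is at least [kk L * x^(L-1)]. *)
Definition kk (L : R) := Rmin 1 (Rpower 2 (1 - L)).

Lemma kk_pos L : 0 < kk L.
Proof. apply Rmin_glb_lt; [lra|apply Rpower_pos]. Qed.

Lemma Rpower_half_interval L x g : 0 < x -> x / 2 <= g -> g <= x ->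
  kk L * Rpower x (L - 1) <= Rpower g (L - 1).
Proof.
  intros Hx H1 H2.
  assert (P := Rpower_pos x (L - 1)).
  assert (K0 : 0 <= kk L) by (left; apply kk_pos).
  assert (K1 : kk L <= 1) by apply Rmin_l.
  assert (K2 : kk L <= / Rpower 2 (L - 1)).
  { rewrite <- Rpower_Ropp. replace (- (L - 1)) with (1 - L) by ring. apply Rmin_r. }
  destruct (Rle_lt_dec 0 (L - 1)) as [h|h].
  - assert (H : Rpower (x / 2) (L - 1) <= Rpower g (L - 1)) by (apply Rle_Rpower_l; lra).
    unfold Rdiv in H. rewrite <- Rpower_mult_distr, Rpower_inv_base in H by lra.
    assert (kk L * Rpower x (L - 1) <= / Rpower 2 (L - 1) * Rpower x (L - 1))
      by (apply Rmult_le_compat_r; lra).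
    lra.
  - assert (Rpower x (L - 1) <= Rpower g (L - 1)) by (apply Rpower_le_base_neg; lra).
    nra.
Qed.

Lemma GammaF_eq L : GammaF L = Iinf (gk L 1).
Proof.
  unfold GammaF. f_equal. apply functional_extensionality. intro x.
  unfold gk. do 3 f_equal. ring.
Qed.

(** [Gamma(L) > 0]: the integrand is bounded below on [1, 2]. *)
Lemma GammaF_pos L : 0 < L -> 0 < GammaF L.
Proof.
  intros HL. rewrite GammaF_eq.
  destruct (gk_int_bounded L 1 HL ltac:(lra)) as [J [HJ B]].
  set (m := kk L * Rpower 2 (L - 1) * exp (- (1 * 2))).
  assert (Hm : 0 < m).
  { unfold m. assert (0 < kk L) by apply kk_pos.
    assert (0 < Rpower 2 (L - 1)) by apply Rpower_pos.
    assert (0 < exp (- (1 * 2))) by apply exp_pos.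
    repeat apply Rmult_lt_0_compat; auto. }
  apply Rlt_le_trans with (m * (2 - 1)); [lra|].
  apply Rle_trans with (RInt (gk L 1) 1 2); [|apply (Iinf_ge _ J); auto; try apply gk_pos_integrand; lra].
  apply RInt_ge_const; [lra|apply gk_pos_integrand; lra|].
  intros x Hx. unfold m, gk.
  assert (kk L * Rpower 2 (L - 1) <= Rpower x (L - 1)) by (apply Rpower_half_interval; lra).
  assert (exp (- (1 * 2)) <= exp (- (1 * x))) by (apply exp_le_mono; lra).
  apply Rmult_le_compat; auto; try lra.
  left. apply Rmult_lt_0_compat; [apply kk_pos|apply Rpower_pos].
  left. apply exp_pos.
Qed.

Definition cst (L : R) := / (Rpower (/ L) L * GammaF L).

Lemma cst_pos L : 0 < L -> 0 < cst L.
Proof.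
  intros HL. apply Rinv_0_lt_compat, Rmult_lt_0_compat; [apply Rpower_pos|apply GammaF_pos; auto].
Qed.

Lemma pdf_eq L x : 0 < L -> gamma_pdf L (/ L) x = cst L * gk L L x.
Proof.
  intros HL. unfold gamma_pdf, cst, gk.
  replace (- x / / L) with (- (L * x)) by (field; lra). ring.
Qed.

Lemma pdf_cont L x : 0 < x -> continuous (fun g => gamma_pdf L (/ L) g) x.
Proof. intros. apply ex_derive_cont. unfold gamma_pdf, Rpower. auto_derive. lra. Qed.

Lemma pdf_nonneg L x : 0 < L -> 0 <= gamma_pdf L (/ L) x.
Proof.
  intros HL. rewrite pdf_eq by auto.
  left. apply Rmult_lt_0_compat; [apply cst_pos; auto|apply gk_pos].
Qed.

Definition pdf_low (L y : R) := cst L * kk L * Rpower y (L - 1) * exp (- L).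

Lemma pdf_low_pos L y : 0 < L -> 0 < pdf_low L y.
Proof.
  intros HL. unfold pdf_low.
  assert (0 < cst L) by (apply cst_pos; auto). assert (0 < kk L) by apply kk_pos.
  assert (0 < Rpower y (L - 1)) by apply Rpower_pos. assert (0 < exp (- L)) by apply exp_pos.
  repeat apply Rmult_lt_0_compat; auto.
Qed.

Lemma pdf_lower L y h : 0 < L -> 0 < y <= 1 -> y / 2 <= h <= y ->
  pdf_low L y <= gamma_pdf L (/ L) h.
Proof.
  intros HL Hy Hh. rewrite pdf_eq by auto. unfold pdf_low, gk.
  assert (A := Rpower_half_interval L y h ltac:(lra) ltac:(lra) ltac:(lra)).
  assert (B : exp (- L) <= exp (- (L * h))) by (apply exp_le_mono; nra).
  assert (0 < cst L) by (apply cst_pos; auto). assert (0 < kk L) by apply kk_pos.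
  assert (0 < Rpower y (L - 1)) by apply Rpower_pos. assert (0 < exp (- L)) by apply exp_pos.
  rewrite !Rmult_assoc. apply Rmult_le_compat_l; [lra|].
  rewrite <- Rmult_assoc. apply Rmult_le_compat; nra.
Qed.

(** * Truncated integrals [Gt q t = int_0^t q] *)

Definition trunc (q : R -> R) (t : R) (g : R) := q g * (if Rle_dec g t then 1 else 0).
Definition Gt (q : R -> R) (t : R) := Iinf (trunc q t).

Definition power_dominated (q : R -> R) (c s : R) :=
  (forall x, 0 < x -> continuous q x) /\ (forall x, 0 < x -> 0 <= q x) /\
  (forall x, 0 < x -> q x <= c * Rpower x (s - 1)) /\ 0 <= c /\ 0 < s.

(** [x |-> x^s] on (0,+oo) extended by 0: [Gt q] is Lipschitz with respect to it. *)
Definition Pm (s t : R) := if Rle_dec t 0 then 0 else Rpower t s.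

Lemma trunc_above (q : R -> R) t a b : 0 < a -> a < b -> t <= a ->
  ex_RInt (trunc q t) a b /\ RInt (trunc q t) a b = 0.
Proof.
  intros Ha Hab Hta.
  assert (E : forall x, Rmin a b < x < Rmax a b -> (fun _ => 0) x = trunc q t x).
  { intros x Hx. rewrite Rmin_left, Rmax_right in Hx by lra. unfold trunc.
    destruct Rle_dec; [lra|ring]. }
  split.
  - eapply ex_RInt_ext; eauto. apply ex_RInt_const.
  - rewrite <- (RInt_ext _ _ a b E), RInt_const. apply Rmult_0_r.
Qed.

Lemma continuous_eps_delta (f : R -> R) x :
  continuous f x <->
  forall e, 0 < e -> exists d, 0 < d /\ forall y, Rabs (y - x) < d -> Rabs (f y - f x) < e.
Proof.
  unfold continuous. rewrite <- continuity_pt_filterlim.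
  unfold continuity_pt, continue_in, limit1_in, limit_in. simpl. unfold R_dist.
  split; intros H e He; destruct (H e He) as [d [Hd P]]; exists d; split; auto.
  - intros y Hy. destruct (Req_dec y x) as [->|hne].
    + unfold Rminus; rewrite Rplus_opp_r, Rabs_R0; auto.
    + apply P. repeat split; auto.
  - intros y [_ Hy]. apply P; auto.
Qed.

Lemma Pm_cont s t : 0 < s -> continuous (Pm s) t.
Proof.
  intros Hs. destruct (Rlt_le_dec 0 t) as [h|h].
  - apply (continuous_ext_loc (Pm s) (fun g => Rpower g s)); [|apply Rpower_continuous; auto].
    exists (mkposreal t h). intros y Hy. change (Rabs (y - t) < t) in Hy. apply Rabs_def2 in Hy.
    unfold Pm. destruct Rle_dec; auto; lra.
  - destruct (Rle_lt_or_eq_dec _ _ h) as [hl| ->].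
    + apply (continuous_ext_loc (Pm s) (fun _ => 0)); [|apply continuous_const].
      exists (mkposreal (- t) ltac:(lra)). intros y Hy.
      change (Rabs (y - t) < - t) in Hy. apply Rabs_def2 in Hy.
      unfold Pm. destruct Rle_dec; auto; lra.
    + apply continuous_eps_delta. intros e He.
      exists (Rpower e (/ s)). split; [apply Rpower_pos|]. intros y Hy.
      unfold Pm at 2. destruct (Rle_dec 0 0) as [_|n]; [|lra].
      rewrite Rminus_0_r in Hy |- *. unfold Pm.
      destruct Rle_dec as [h1|h1]; [rewrite Rabs_R0; auto|].
      rewrite Rabs_right by (left; apply Rpower_pos).
      rewrite Rabs_right in Hy by lra.
      assert (H : Rpower y s < Rpower (Rpower e (/ s)) s)
        by (apply Rlt_Rpower_l; [|split]; lra).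
      rewrite Rpower_mult, Rinv_l, Rpower_1 in H by lra. exact H.
Qed.

Section Truncation.

Variables (q : R -> R) (c s : R).
Hypothesis Hq : power_dominated q c s.

Lemma dom_pos_integrand : pos_integrand q.
Proof.
  pose proof Hq as [C [P _]]. split; auto. intros a b Ha Hab. apply ex_RInt_cont_pos; auto; lra.
Qed.

Lemma RInt_dom_le a b : 0 < a -> a <= b -> RInt q a b <= c * ((Rpower b s - Rpower a s) / s).
Proof.
  intros Ha Hab. pose proof Hq as [C [P [U [Hc Hs]]]].
  assert (Ex : ex_RInt (fun g => Rpower g (s - 1)) a b)
    by (apply ex_RInt_cont_pos; auto; intros; apply Rpower_continuous; auto).
  rewrite <- RInt_Rpower, <- (RInt_scal _ a b c Ex : RInt (fun g => c * _) a b = c * _) by lra.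
  apply RInt_le; auto; [apply pos_integrand_ex; [apply dom_pos_integrand|lra..]|
    apply (ex_RInt_scal _ _ _ c Ex)|].
  intros x Hx. apply U; lra.
Qed.

Lemma RInt_dom_nonneg a b : 0 < a -> a <= b -> 0 <= RInt q a b.
Proof.
  intros Ha Hab. apply RInt_ge_0; auto; [apply pos_integrand_ex; auto; apply dom_pos_integrand|].
  intros; apply dom_pos_integrand; lra.
Qed.

Lemma trunc_below t a b : 0 < a -> a < b -> b <= t ->
  ex_RInt (trunc q t) a b /\ RInt (trunc q t) a b = RInt q a b.
Proof.
  intros Ha Hab Hbt.
  assert (E : forall x, Rmin a b < x < Rmax a b -> q x = trunc q t x).
  { intros x Hx. rewrite Rmin_left, Rmax_right in Hx by lra. unfold trunc.
    destruct Rle_dec; [ring|lra]. }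
  split.
  - eapply ex_RInt_ext; eauto. apply dom_pos_integrand; auto.
  - symmetry. apply RInt_ext. auto.
Qed.

Lemma trunc_across t a b : 0 < a -> a < t -> t < b ->
  ex_RInt (trunc q t) a b /\ RInt (trunc q t) a b = RInt q a t.
Proof.
  intros Ha Hat Htb.
  destruct (trunc_below t a t Ha Hat (Rle_refl t)) as [E1 R1].
  destruct (trunc_above q t t b ltac:(lra) Htb (Rle_refl t)) as [E2 R2].
  split; [eapply ex_RInt_Chasles; eauto|].
  rewrite <- (RInt_Chasles _ a t b E1 E2), R1, R2. apply Rplus_0_r.
Qed.

Lemma trunc_pos_integrand t : pos_integrand (trunc q t).
Proof.
  split.
  - intros x Hx. unfold trunc. destruct Rle_dec; [rewrite Rmult_1_r; apply Hq; auto|lra].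
  - intros a b Ha Hab.
    destruct (Rle_lt_dec b t) as [h|h]; [apply trunc_below; auto|].
    destruct (Rle_lt_dec t a) as [h2|h2]; [apply trunc_above; auto|].
    apply trunc_across; auto.
Qed.

Lemma trunc_int_bounded_of t K : (forall a b, 0 < a -> a < b -> b <= t -> RInt q a b <= K) ->
  0 <= K -> int_bounded (trunc q t) K.
Proof.
  intros H HK a b Ha Hab.
  destruct (Rle_lt_dec b t) as [h|h].
  { destruct (trunc_below t a b Ha Hab h) as [_ ->]. auto. }
  destruct (Rle_lt_dec t a) as [h2|h2].
  { destruct (trunc_above q t a b Ha Hab h2) as [_ ->]. auto. }
  destruct (trunc_across t a b Ha h2 h) as [_ ->]. apply H; lra.
Qed.

Lemma trunc_int_bounded t : exists K, int_bounded (trunc q t) K.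
Proof.
  pose proof Hq as [_ [_ [_ [Hc Hs]]]].
  set (T := Rmax t 1). assert (T1 := Rmax_l t 1). assert (T2 := Rmax_r t 1).
  assert (0 < Rpower T s) by apply Rpower_pos.
  exists (c * (Rpower T s / s)). apply trunc_int_bounded_of.
  - intros a b Ha Hab Hbt. eapply Rle_trans; [apply RInt_dom_le; lra|].
    apply Rmult_le_compat_l; auto. unfold Rdiv. apply Rmult_le_compat_r.
    + left; apply Rinv_0_lt_compat; auto.
    + assert (Rpower b s <= Rpower T s) by (apply Rle_Rpower_l; unfold T in *; lra).
      assert (0 < Rpower a s) by apply Rpower_pos. lra.
  - apply Rmult_le_pos; auto. unfold Rdiv. apply Rmult_le_pos; [lra|].
    left; apply Rinv_0_lt_compat; auto.
Qed.

Lemma Gt_conv t : improper_int_0_inf (trunc q t) (Gt q t).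
Proof. destruct (trunc_int_bounded t) as [K B]. exact (Iinf_conv _ K (trunc_pos_integrand t) B). Qed.

Lemma Gt_nonneg t : 0 <= Gt q t.
Proof. destruct (trunc_int_bounded t) as [K B]. exact (Iinf_nonneg _ K (trunc_pos_integrand t) B). Qed.

Lemma Gt_le_of t K : (forall a b, 0 < a -> a < b -> b <= t -> RInt q a b <= K) -> 0 <= K ->
  Gt q t <= K.
Proof.
  intros H HK. apply (Iinf_le _ K (trunc_pos_integrand t)). apply trunc_int_bounded_of; auto.
Qed.

Lemma Gt_nonpos t : t <= 0 -> Gt q t = 0.
Proof.
  intros Ht. apply Rle_antisym; [|apply Gt_nonneg].
  apply Gt_le_of; [intros; lra|lra].
Qed.

Lemma Gt_le_pow t : 0 < t -> Gt q t <= c * (Rpower t s / s).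
Proof.
  intros Ht. pose proof Hq as [_ [_ [_ [Hc Hs]]]].
  assert (0 < Rpower t s) by apply Rpower_pos.
  apply Gt_le_of.
  - intros a b Ha Hab Hbt. eapply Rle_trans; [apply RInt_dom_le; lra|].
    apply Rmult_le_compat_l; auto. unfold Rdiv. apply Rmult_le_compat_r.
    + left; apply Rinv_0_lt_compat; auto.
    + assert (Rpower b s <= Rpower t s) by (apply Rle_Rpower_l; lra).
      assert (0 < Rpower a s) by apply Rpower_pos. lra.
  - apply Rmult_le_pos; auto. unfold Rdiv. apply Rmult_le_pos; [lra|].
    left; apply Rinv_0_lt_compat; auto.
Qed.

Lemma Gt_ge t a : 0 < a -> a < t -> RInt q a t <= Gt q t.
Proof.
  intros Ha Hat.
  destruct (trunc_across t a (t + 1) Ha Hat ltac:(lra)) as [_ <-].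
  destruct (trunc_int_bounded t) as [K B].
  apply (Iinf_ge _ K (trunc_pos_integrand t) B); lra.
Qed.

Lemma Gt_step t t' : 0 < t -> t < t' -> Gt q t' = Gt q t + RInt q t t'.
Proof.
  intros Ht Htt. apply Iinf_spec. intros e He.
  destruct (Gt_conv t e He) as [d [M [Hd PP]]].
  exists (Rmin d t), (Rmax M t'). split; [apply Rmin_glb_lt; lra|].
  intros a b Ha Hb.
  assert (X1 := Rmin_l d t). assert (X2 := Rmin_r d t).
  assert (X3 := Rmax_l M t'). assert (X4 := Rmax_r M t').
  specialize (PP a b ltac:(split; lra) ltac:(lra)).
  destruct (trunc_across t a b ltac:(lra) ltac:(lra) ltac:(lra)) as [E1 R1].
  destruct (trunc_across t' a b ltac:(lra) ltac:(lra) ltac:(lra)) as [E2 R2].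
  rewrite RI_RInt in PP |- * by auto. rewrite R1 in PP. rewrite R2.
  rewrite <- (RInt_Chasles q a t t') by (apply dom_pos_integrand; lra).
  unfold plus; simpl.
  replace (RInt q a t + RInt q t t' - (Gt q t + RInt q t t')) with (RInt q a t - Gt q t) by ring.
  auto.
Qed.

Lemma Gt_modulus_ordered t t' : t <= t' ->
  Rabs (Gt q t - Gt q t') <= c / s * Rabs (Pm s t - Pm s t').
Proof.
  intros Htt. pose proof Hq as [_ [_ [_ [Hc Hs]]]].
  assert (Hcs : 0 <= c / s) by (apply Rmult_le_pos; auto; left; apply Rinv_0_lt_compat; auto).
  unfold Pm. destruct (Rle_dec t 0) as [h1|h1]; destruct (Rle_dec t' 0) as [h2|h2].
  - rewrite (Gt_nonpos t h1), (Gt_nonpos t' h2), Rminus_0_r, Rabs_R0. lra.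
  - rewrite (Gt_nonpos t h1).
    assert (0 <= Gt q t') by apply Gt_nonneg.
    assert (Gt q t' <= c * (Rpower t' s / s)) by (apply Gt_le_pow; lra).
    assert (0 < Rpower t' s) by apply Rpower_pos.
    rewrite !Rminus_0_l, !Rabs_Ropp, !Rabs_right by lra.
    replace (c / s * Rpower t' s) with (c * (Rpower t' s / s)) by (field; lra). auto.
  - lra.
  - destruct (Rle_lt_or_eq_dec _ _ Htt) as [hl| <-].
    + rewrite (Gt_step t t' ltac:(lra) hl).
      assert (0 <= RInt q t t') by (apply RInt_dom_nonneg; lra).
      assert (RInt q t t' <= c * ((Rpower t' s - Rpower t s) / s)) by (apply RInt_dom_le; lra).
      assert (Rpower t s <= Rpower t' s) by (apply Rle_Rpower_l; lra).
      replace (Gt q t - (Gt q t + RInt q t t')) with (- RInt q t t') by ring.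
      rewrite Rabs_Ropp, Rabs_right, (Rabs_left1 (Rpower t s - Rpower t' s)) by lra.
      replace (c / s * - (Rpower t s - Rpower t' s)) with (c * ((Rpower t' s - Rpower t s) / s))
        by (field; lra).
      auto.
    + unfold Rminus. rewrite !Rplus_opp_r, Rabs_R0. lra.
Qed.

Lemma Gt_modulus t t' : Rabs (Gt q t - Gt q t') <= c / s * Rabs (Pm s t - Pm s t').
Proof.
  destruct (Rle_lt_dec t t') as [h|h]; [apply Gt_modulus_ordered; auto|].
  rewrite Rabs_minus_sym, (Rabs_minus_sym (Pm s t)). apply Gt_modulus_ordered; lra.
Qed.

Lemma Gt_cont_comp (phi : R -> R) h : continuous phi h -> continuous (fun x => Gt q (phi x)) h.
Proof.
  intros Cphi. pose proof Hq as [_ [_ [_ [Hc Hs]]]].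
  assert (Hcs : 0 <= c / s) by (apply Rmult_le_pos; auto; left; apply Rinv_0_lt_compat; auto).
  assert (CP : continuous (fun x => Pm s (phi x)) h)
    by (apply (continuous_comp phi (Pm s)); auto; apply Pm_cont; auto).
  apply continuous_eps_delta. intros e He.
  destruct (proj1 (continuous_eps_delta _ _) CP (e / (c / s + 1))) as [d [Hd P]].
  { apply Rdiv_lt_0_compat; lra. }
  exists d. split; auto. intros y Hy. specialize (P y Hy).
  eapply Rle_lt_trans; [apply Gt_modulus|].
  assert (0 <= Rabs (Pm s (phi y) - Pm s (phi h))) by apply Rabs_pos.
  apply Rle_lt_trans with ((c / s + 1) * Rabs (Pm s (phi y) - Pm s (phi h))); [nra|].
  apply Rmult_lt_reg_r with (/ (c / s + 1)); [apply Rinv_0_lt_compat; lra|].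
  replace ((c / s + 1) * Rabs (Pm s (phi y) - Pm s (phi h)) * / (c / s + 1))
    with (Rabs (Pm s (phi y) - Pm s (phi h))) by (field; lra). exact P.
Qed.

Lemma Gt_le_dominated (g : R -> R) t k K : pos_integrand g -> int_bounded g K ->
  (forall x, 0 < x -> x <= t -> q x <= k * g x) -> 0 <= k -> 0 <= K -> Gt q t <= k * K.
Proof.
  intros Gg B H Hk HK. apply Gt_le_of; [|apply Rmult_le_pos; auto].
  intros a b Ha Hab Hbt. apply Rle_trans with (RInt (fun x => k * g x) a b).
  - apply RInt_le; try lra; [apply dom_pos_integrand; auto|apply (ex_RInt_scal g); apply Gg; auto|].
    intros x Hx. apply H; lra.
  - rewrite (RInt_scal g a b k ltac:(apply Gg; auto) : RInt (fun x => k * g x) a b = k * _).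
    apply Rmult_le_compat_l; auto.
Qed.

Section BoundedDominated.
Variable K : R.
Hypothesis B : int_bounded q K.

Lemma Gt_le_Iinf t : Gt q t <= Iinf q.
Proof.
  assert (G := dom_pos_integrand).
  apply Gt_le_of; [intros; apply (Iinf_ge q K); auto|apply (Iinf_nonneg q K); auto].
Qed.

Lemma Iinf_minus_Gt t u v : 0 < u -> u < v -> t <= u -> RInt q u v <= Iinf q - Gt q t.
Proof.
  intros Hu Huv Htu. assert (G := dom_pos_integrand).
  assert (I1 : RInt q u v <= Iinf q) by (apply (Iinf_ge q K); auto).
  enough (Gt q t <= Iinf q - RInt q u v) by lra.
  apply Gt_le_of; [|lra]. intros a b Ha Hab Hbt.
  assert (RInt q u v <= RInt q b v) by (apply RInt_subinterval; [exact G|lra..]).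
  assert (RInt q a v <= Iinf q) by (apply (Iinf_ge q K); auto; lra).
  rewrite <- (RInt_Chasles q a b v) in * by (apply pos_integrand_ex; auto; lra).
  unfold plus in *; simpl in *. lra.
Qed.

End BoundedDominated.

End Truncation.

(** * Reduction of [ED_j] to two iterated integrals *)

(** [Tr rho r = rho^r = 2^(2 R_j)] for the rate [R_j = r/2 log2 rho]. *)
Definition Tr (rho r : R) := Rpower rho r.
Definition RJ (rho r : R) := r / 2 * log2 rho.

(** Outage happens iff [Gamma0 <= phi rho r H0]. *)
Definition phi (rho r h : R) := ((Tr rho r - 1) / (rho * h) - 1) / rho.

(** Side-information density weighted by the distortion [1/(rho g + D)]. *)
Definition qD (Ls rho D g : R) := gamma_pdf Ls (/ Ls) g * / (rho * g + D).

(** Integrands in [h] of the no-outage and outage parts of [ED_j]. *)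
Definition O1 (Lc Ls rho r h : R) :=
  gamma_pdf Lc (/ Lc) h * (Iinf (qD Ls rho (Tr rho r)) - Gt (qD Ls rho (Tr rho r)) (phi rho r h)).
Definition O2 (Lc Ls rho r h : R) := gamma_pdf Lc (/ Lc) h * Gt (qD Ls rho 1) (phi rho r h).

Lemma ln2_pos : 0 < ln 2.
Proof. rewrite <- ln_1. apply ln_increasing; lra. Qed.

Lemma Tr_gt1 rho r : 1 < rho -> 0 < r -> 1 < Tr rho r.
Proof. intros. unfold Tr. rewrite <- (Rpower_O rho) by lra. apply Rpower_lt; lra. Qed.

Lemma Dd_0 x : Dd 0 x = / (x + 1).
Proof. unfold Dd. rewrite Rmult_0_r. unfold Rpower. rewrite Rmult_0_l, exp_0. auto. Qed.

Lemma pow2_RJ rho r : 0 < rho -> Rpower 2 (2 * RJ rho r) = Tr rho r.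
Proof.
  intros H. unfold RJ, Tr, log2, Rpower. f_equal.
  assert (L2 := ln2_pos). field. lra.
Qed.

Lemma Dd_RJ rho r x : 0 < rho -> Dd (RJ rho r) x = / (x + Tr rho r).
Proof. intros H. unfold Dd. rewrite pow2_RJ; auto. Qed.

Lemma log_rate_ge u v : 0 <= u -> 0 <= v ->
  (/ 2 * log2 (1 + u) >= / 2 * log2 (1 + v) <-> v <= u).
Proof.
  intros Hu Hv. unfold log2. assert (L2 := ln2_pos).
  assert (Hinv : 0 < / ln 2) by (apply Rinv_0_lt_compat; auto).
  split; intros H.
  - apply Rnot_lt_le. intro h.
    assert (ln (1 + u) < ln (1 + v)) by (apply ln_increasing; lra).
    assert (ln (1 + u) / ln 2 < ln (1 + v) / ln 2) by (apply Rmult_lt_compat_r; auto).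
    lra.
  - assert (ln (1 + v) <= ln (1 + u)) by (apply ln_le; lra).
    assert (ln (1 + v) / ln 2 <= ln (1 + u) / ln 2) by (apply Rmult_le_compat_r; lra).
    lra.
Qed.

Lemma phi_iff rho r h g : 1 < rho -> 0 < h ->
  (g <= phi rho r h <-> rho * h * (rho * g + 1) <= Tr rho r - 1).
Proof.
  intros Hr Hh. unfold phi. assert (Hrh : 0 < rho * h) by nra.
  replace (((Tr rho r - 1) / (rho * h) - 1) / rho)
    with ((Tr rho r - 1 - rho * h) / (rho * h * rho)) by (field; lra).
  rewrite <- Rle_div_r by nra. split; intros; nra.
Qed.

Lemma ind_out_eq rho r h g : 1 < rho -> 0 < r -> 0 < h -> 0 < g ->
  ind_out (RJ rho r) (rho * h) (rho * g) = if Rle_dec g (phi rho r h) then 1 else 0.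
Proof.
  intros Hr Hr0 Hh Hg. unfold ind_out.
  rewrite pow2_RJ by lra.
  assert (T1 := Tr_gt1 rho r Hr Hr0).
  assert (Hu : 0 <= (Tr rho r - 1) / (rho * g + 1))
    by (apply Rmult_le_pos; [lra|left; apply Rinv_0_lt_compat; nra]).
  assert (E : rho * h <= (Tr rho r - 1) / (rho * g + 1) <-> g <= phi rho r h).
  { rewrite phi_iff, <- Rle_div_r by nra. lra. }
  destruct Rge_dec as [h1|h1]; destruct Rle_dec as [h2|h2]; auto.
  - exfalso. apply h2, E, (log_rate_ge _ _ Hu); nra.
  - exfalso. apply h1, log_rate_ge; [exact Hu|nra|]. apply E; auto.
Qed.

Section WeightedDensity.
Variables (Ls rho D : R).
Hypotheses (HLs : 0 < Ls) (Hrho : 0 < rho) (HD : 1 <= D).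

Lemma qD_le_gk x : 0 < x -> qD Ls rho D x <= cst Ls * gk Ls Ls x.
Proof.
  intros Hx. unfold qD. rewrite pdf_eq by auto.
  assert (0 < cst Ls * gk Ls Ls x) by (apply Rmult_lt_0_compat; [apply cst_pos; auto|apply gk_pos]).
  assert (/ (rho * x + D) <= 1) by (rewrite <- Rinv_1; apply Rinv_le_contravar; nra).
  assert (0 < / (rho * x + D)) by (apply Rinv_0_lt_compat; nra).
  nra.
Qed.

Lemma qD_dominated : power_dominated (qD Ls rho D) (cst Ls) Ls.
Proof.
  assert (Hc := cst_pos Ls HLs).
  split; [|split; [|split; [|split]]]; try lra.
  - intros x Hx. apply ex_derive_cont. unfold qD, gamma_pdf, Rpower. auto_derive. nra.
  - intros x Hx. unfold qD. apply Rmult_le_pos; [apply pdf_nonneg; auto|].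
    left; apply Rinv_0_lt_compat; nra.
  - intros x Hx. eapply Rle_trans; [apply qD_le_gk; auto|].
    apply Rmult_le_compat_l; [lra|apply gk_le_pow; auto].
Qed.

Lemma qD_int_bounded : exists K, int_bounded (qD Ls rho D) K.
Proof.
  destruct (gk_int_bounded Ls Ls HLs HLs) as [J [HJ B]].
  exists (cst Ls * J). apply (int_bounded_le _ (gk Ls Ls)); auto.
  - apply (dom_pos_integrand _ _ _ qD_dominated).
  - apply gk_pos_integrand.
  - intros x Hx. apply qD_le_gk; auto.
  - left; apply cst_pos; auto.
Qed.

End WeightedDensity.

Lemma phi_cont rho r h : 1 < rho -> 0 < h -> continuous (phi rho r) h.
Proof. intros. apply ex_derive_cont. unfold phi. auto_derive. nra. Qed.

Section Integrands.
Variables (Lc Ls rho r : R).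
Hypotheses (HLc : 0 < Lc) (HLs : 0 < Ls) (Hrho : 1 < rho) (Hr : 0 < r).

Let T1 : 1 < Tr rho r := Tr_gt1 rho r Hrho Hr.

Lemma inner_outage h : 0 < h ->
  Iinf (fun g0 => gamma_pdf Ls (/ Ls) g0 * (Dd 0 (rho * g0) * ind_out (RJ rho r) (rho * h) (rho * g0)))
  = Gt (qD Ls rho 1) (phi rho r h).
Proof.
  intros Hh. apply Iinf_ext_pos. intros g Hg.
  rewrite ind_out_eq, Dd_0 by auto. unfold trunc, qD. ring.
Qed.

Lemma inner_no_outage h : 0 < h ->
  Iinf (fun g0 => gamma_pdf Ls (/ Ls) g0 *
                  (Dd (RJ rho r) (rho * g0) * (1 - ind_out (RJ rho r) (rho * h) (rho * g0))))
  = Iinf (qD Ls rho (Tr rho r)) - Gt (qD Ls rho (Tr rho r)) (phi rho r h).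
Proof.
  intros Hh. set (q := qD Ls rho (Tr rho r)).
  rewrite (Iinf_ext_pos _ (fun g => q g - trunc q (phi rho r h) g)).
  2:{ intros g Hg. rewrite ind_out_eq, Dd_RJ by lra. unfold trunc, q, qD. ring. }
  assert (N : power_dominated q (cst Ls) Ls) by (apply qD_dominated; lra).
  destruct (qD_int_bounded Ls rho (Tr rho r)) as [K B]; try lra.
  apply Iinf_spec, improper_minus.
  - apply (dom_pos_integrand _ _ _ N).
  - apply (trunc_pos_integrand _ _ _ N).
  - apply (Iinf_conv _ K); auto. apply (dom_pos_integrand _ _ _ N).
  - apply (Gt_conv _ _ _ N).
Qed.

Lemma ED_split : EDj Lc Ls rho (RJ rho r) = Iinf (O1 Lc Ls rho r) + Iinf (O2 Lc Ls rho r).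
Proof.
  unfold EDj, Expect.
  f_equal; apply Iinf_ext_pos; intros h Hh; cbv beta; unfold O1, O2; f_equal.
  - apply inner_no_outage; auto.
  - apply inner_outage; auto.
Qed.

Lemma O2_pos_integrand : pos_integrand (O2 Lc Ls rho r).
Proof.
  assert (N : power_dominated (qD Ls rho 1) (cst Ls) Ls) by (apply qD_dominated; lra).
  split.
  - intros x Hx. apply Rmult_le_pos; [apply pdf_nonneg; auto|apply (Gt_nonneg _ _ _ N)].
  - intros a b Ha Hab. apply ex_RInt_cont_pos; try lra. intros x Hx.
    apply (continuous_mult (fun h => gamma_pdf Lc (/ Lc) h)); [apply pdf_cont; auto|].
    apply (Gt_cont_comp _ _ _ N (phi rho r)). apply phi_cont; auto.
Qed.

Lemma O1_pos_integrand : pos_integrand (O1 Lc Ls rho r).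
Proof.
  assert (N : power_dominated (qD Ls rho (Tr rho r)) (cst Ls) Ls) by (apply qD_dominated; lra).
  destruct (qD_int_bounded Ls rho (Tr rho r)) as [K B]; try lra.
  split.
  - intros x Hx. apply Rmult_le_pos; [apply pdf_nonneg; auto|].
    assert (Gt (qD Ls rho (Tr rho r)) (phi rho r x) <= Iinf (qD Ls rho (Tr rho r)))
      by (apply (Gt_le_Iinf _ _ _ N K B)). lra.
  - intros a b Ha Hab. apply ex_RInt_cont_pos; try lra. intros x Hx.
    apply (continuous_mult (fun h => gamma_pdf Lc (/ Lc) h)); [apply pdf_cont; auto|].
    apply (continuous_minus (fun _ => Iinf (qD Ls rho (Tr rho r)))); [apply continuous_const|].
    apply (Gt_cont_comp _ _ _ N (phi rho r)). apply phi_cont; auto.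
Qed.

End Integrands.

(** * Upper bounds: polynomial decay of both parts of [ED_j] *)

(** No-outage weight: [1/(rho g + rho^r) <= rho^-(th r + 1 - th) g^(th - 1)] by the weighted
    geometric mean inequality. *)
Lemma qD_Tr_pointwise Ls rho r th g : 0 < Ls -> 1 < rho -> 0 <= th <= 1 -> 0 < g ->
  qD Ls rho (Tr rho r) g <=
  cst Ls * Rpower rho (- (th * r + 1 - th)) * gk (Ls + th - 1) Ls g.
Proof.
  intros HL Hr Ht Hg. unfold qD. rewrite pdf_eq by lra.
  assert (HT : 0 < Tr rho r) by apply Rpower_pos.
  assert (M := geometric_mean_le_sum (rho * g) (Tr rho r) th ltac:(nra) HT Ht).
  assert (P1 : 0 < Rpower (rho * g) (1 - th) * Rpower (Tr rho r) th)
    by (apply Rmult_lt_0_compat; apply Rpower_pos).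
  assert (I1 : / (rho * g + Tr rho r) <= / (Rpower (rho * g) (1 - th) * Rpower (Tr rho r) th))
    by (apply Rinv_le_contravar; auto).
  assert (EQ : gk Ls Ls g * / (Rpower (rho * g) (1 - th) * Rpower (Tr rho r) th)
               = Rpower rho (- (th * r + 1 - th)) * gk (Ls + th - 1) Ls g).
  { unfold gk, Tr. rewrite <- Rpower_mult_distr, Rpower_mult by lra.
    rewrite !Rinv_mult, <- !Rpower_Ropp.
    replace (Ls + th - 1 - 1) with ((Ls - 1) + - (1 - th)) by ring.
    replace (- (th * r + 1 - th)) with (- (1 - th) + - (r * th)) by ring.
    rewrite !Rpower_plus. ring. }
  assert (0 < gk Ls Ls g) by apply gk_pos. assert (0 < cst Ls) by (apply cst_pos; auto).
  rewrite Rmult_assoc, (Rmult_assoc (cst Ls)), <- EQ.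
  apply Rmult_le_compat_l; [lra|]. apply Rmult_le_compat_l; lra.
Qed.

Lemma O1_upper Lc Ls th : 0 < Lc -> 0 < Ls -> 0 <= th <= 1 -> 0 < Ls - 1 + th ->
  exists K, 0 <= K /\ forall rho r, 1 < rho -> 0 < r ->
    int_bounded (O1 Lc Ls rho r) (K * Rpower rho (- (th * r + 1 - th))).
Proof.
  intros Hc HL Ht Hs.
  destruct (gk_int_bounded (Ls + th - 1) Ls ltac:(lra) HL) as [J [HJ BJ]].
  destruct (gk_int_bounded Lc Lc Hc Hc) as [Jc [HJc BJc]].
  assert (cs := cst_pos Ls HL). assert (cc := cst_pos Lc Hc).
  exists (cst Lc * (cst Ls * J * Jc)). split; [repeat apply Rmult_le_pos; lra|].
  intros rho r Hr Hr0.
  set (E := Rpower rho (- (th * r + 1 - th))). assert (HE : 0 < E) by apply Rpower_pos.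
  set (q := qD Ls rho (Tr rho r)).
  assert (T1 := Tr_gt1 rho r Hr Hr0).
  assert (N : power_dominated q (cst Ls) Ls) by (apply qD_dominated; lra).
  destruct (qD_int_bounded Ls rho (Tr rho r)) as [K B]; try lra.
  assert (Iq : Iinf q <= (cst Ls * E) * J).
  { apply Iinf_le; [apply (dom_pos_integrand _ _ _ N)|].
    apply (int_bounded_le _ (gk (Ls + th - 1) Ls)); auto; [apply (dom_pos_integrand _ _ _ N)|
      apply gk_pos_integrand|intros; apply qD_Tr_pointwise; lra|apply Rmult_le_pos; lra]. }
  replace (cst Lc * (cst Ls * J * Jc) * E) with (cst Lc * (cst Ls * E * J) * Jc) by ring.
  apply (int_bounded_le _ (gk Lc Lc)); auto.
  - apply O1_pos_integrand; auto.
  - apply gk_pos_integrand.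
  - intros h Hh. unfold O1. fold q. rewrite pdf_eq by auto.
    assert (0 <= Gt q (phi rho r h)) by apply (Gt_nonneg _ _ _ N).
    assert (0 < gk Lc Lc h) by apply gk_pos.
    assert (gk Lc Lc h * (Iinf q - Gt q (phi rho r h)) <= gk Lc Lc h * (cst Ls * E * J))
      by (apply Rmult_le_compat_l; lra).
    rewrite Rmult_assoc, (Rmult_assoc (cst Lc)). apply Rmult_le_compat_l; lra.
  - repeat apply Rmult_le_pos; lra.
Qed.

Lemma qD_1_pointwise Ls rho r ka la h g : 0 < Ls -> 1 < rho -> 0 < r -> 0 <= ka -> 0 <= la ->
  la <= 1 + ka -> 0 < h -> 0 < g -> g <= phi rho r h ->
  qD Ls rho 1 g <= cst Ls * Rpower rho (ka * (r - 1) - la) * Rpower h (- ka) * gk (Ls - la) Ls g.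
Proof.
  intros HL Hr Hr0 Hk Hl Hlk Hh Hg Hgp. apply phi_iff in Hgp; try lra.
  unfold qD. rewrite pdf_eq by lra.
  set (u := rho * g + 1). assert (Hu1 : 1 <= u) by (unfold u; nra).
  assert (Hu2 : u <= Tr rho r / (rho * h)) by (apply Rle_div_r; fold u in Hgp; nra).
  assert (A1 : / u = Rpower u (- (1 + ka)) * Rpower u ka).
  { rewrite <- Rpower_plus. replace (- (1 + ka) + ka) with (Ropp 1) by ring.
    rewrite Rpower_Ropp, Rpower_1; lra. }
  assert (A2 : Rpower u (- (1 + ka)) <= Rpower (rho * g) (- la)).
  { apply Rle_trans with (Rpower u (- la)); [apply Rle_Rpower; lra|].
    apply Rpower_le_base_neg; unfold u; nra. }
  assert (A3 : Rpower u ka <= Rpower (Tr rho r / (rho * h)) ka) by (apply Rle_Rpower_l; lra).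
  assert (EQ : gk Ls Ls g * (Rpower (rho * g) (- la) * Rpower (Tr rho r / (rho * h)) ka)
               = Rpower rho (ka * (r - 1) - la) * Rpower h (- ka) * gk (Ls - la) Ls g).
  { unfold Rdiv, gk, Tr.
    rewrite Rinv_mult, <- !Rpower_mult_distr, Rpower_mult, !Rpower_inv_base, <- !Rpower_Ropp
      by (try apply Rmult_lt_0_compat; try apply Rinv_0_lt_compat; try apply Rpower_pos; lra).
    replace (Ls - la - 1) with ((Ls - 1) + - la) by ring.
    replace (ka * (r - 1) - la) with (r * ka + - ka + - la) by ring.
    rewrite !Rpower_plus. ring. }
  assert (0 < gk Ls Ls g) by apply gk_pos. assert (0 < cst Ls) by (apply cst_pos; lra).
  assert (0 < Rpower u ka) by apply Rpower_pos.
  assert (0 < Rpower u (- (1 + ka))) by apply Rpower_pos.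
  assert (/ u <= Rpower (rho * g) (- la) * Rpower (Tr rho r / (rho * h)) ka)
    by (rewrite A1; apply Rmult_le_compat; lra).
  replace (cst Ls * Rpower rho (ka * (r - 1) - la) * Rpower h (- ka) * gk (Ls - la) Ls g)
    with (cst Ls * (gk Ls Ls g * (Rpower (rho * g) (- la) * Rpower (Tr rho r / (rho * h)) ka)))
    by (rewrite EQ; ring).
  rewrite Rmult_assoc. apply Rmult_le_compat_l; [lra|]. apply Rmult_le_compat_l; lra.
Qed.

Lemma O2_upper Lc Ls ka la : 0 < Lc -> 0 < Ls -> 0 <= ka < Lc -> 0 <= la < Ls -> la <= 1 + ka ->
  exists K, 0 <= K /\ forall rho r, 1 < rho -> 0 < r ->
    int_bounded (O2 Lc Ls rho r) (K * Rpower rho (ka * (r - 1) - la)).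
Proof.
  intros Hc HL Hk Hl Hlk.
  destruct (gk_int_bounded (Ls - la) Ls ltac:(lra) HL) as [J [HJ BJ]].
  destruct (gk_int_bounded (Lc - ka) Lc ltac:(lra) Hc) as [Jc [HJc BJc]].
  assert (cs := cst_pos Ls HL). assert (cc := cst_pos Lc Hc).
  exists (cst Lc * cst Ls * J * Jc). split; [repeat apply Rmult_le_pos; lra|].
  intros rho r Hr Hr0.
  set (E := Rpower rho (ka * (r - 1) - la)). assert (HE : 0 < E) by apply Rpower_pos.
  assert (N : power_dominated (qD Ls rho 1) (cst Ls) Ls) by (apply qD_dominated; lra).
  replace (cst Lc * cst Ls * J * Jc * E) with ((cst Lc * (cst Ls * E * J)) * Jc) by ring.
  apply (int_bounded_le _ (gk (Lc - ka) Lc)); auto.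
  - apply O2_pos_integrand; auto.
  - apply gk_pos_integrand.
  - intros h Hh. unfold O2. rewrite pdf_eq by auto.
    assert (Hhk : 0 < Rpower h (- ka)) by apply Rpower_pos.
    assert (G1 : Gt (qD Ls rho 1) (phi rho r h) <= (cst Ls * E * Rpower h (- ka)) * J).
    { apply (Gt_le_dominated _ _ _ N (gk (Ls - la) Ls)); auto; [apply gk_pos_integrand| |].
      - intros x Hx Hxp. apply qD_1_pointwise; lra.
      - repeat apply Rmult_le_pos; lra. }
    assert (EQ2 : gk Lc Lc h * Rpower h (- ka) = gk (Lc - ka) Lc h).
    { unfold gk. replace (Lc - ka - 1) with ((Lc - 1) + - ka) by ring. rewrite Rpower_plus. ring. }
    assert (0 < gk Lc Lc h) by apply gk_pos.
    assert (gk Lc Lc h * Gt (qD Ls rho 1) (phi rho r h)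
            <= gk Lc Lc h * (cst Ls * E * Rpower h (- ka) * J)) by (apply Rmult_le_compat_l; lra).
    replace (cst Lc * (cst Ls * E * J) * gk (Lc - ka) Lc h) with
      (cst Lc * (gk Lc Lc h * (cst Ls * E * Rpower h (- ka) * J))) by (rewrite <- EQ2; ring).
    rewrite Rmult_assoc. apply Rmult_le_compat_l; lra.
  - repeat apply Rmult_le_pos; lra.
Qed.

Section Bounded.
Variables (Lc Ls rho r : R).
Hypotheses (HLc : 0 < Lc) (HLs : 0 < Ls) (Hrho : 1 < rho) (Hr : 0 < r).

Lemma O1_int_bounded : exists K, int_bounded (O1 Lc Ls rho r) K.
Proof.
  destruct (O1_upper Lc Ls 1 HLc HLs ltac:(lra) ltac:(lra)) as [K [_ B]]. eauto.
Qed.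

Lemma O2_int_bounded : exists K, int_bounded (O2 Lc Ls rho r) K.
Proof.
  destruct (O2_upper Lc Ls 0 0 HLc HLs ltac:(lra) ltac:(lra) ltac:(lra)) as [K [_ B]]. eauto.
Qed.

Lemma O1_nonneg : 0 <= Iinf (O1 Lc Ls rho r).
Proof. destruct O1_int_bounded as [K B]. apply (Iinf_nonneg _ K); auto. apply O1_pos_integrand; auto. Qed.

Lemma O2_nonneg : 0 <= Iinf (O2 Lc Ls rho r).
Proof. destruct O2_int_bounded as [K B]. apply (Iinf_nonneg _ K); auto. apply O2_pos_integrand; auto. Qed.

End Bounded.

(** * Lower bounds: integrating over dyadic boxes [[x/2, x] x [y/2, y]] *)

Lemma Iinf_ge_box (f : R -> R) K m y : pos_integrand f -> int_bounded f K -> 0 < y ->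
  (forall h, y / 2 <= h <= y -> m <= f h) -> m * (y / 2) <= Iinf f.
Proof.
  intros G B Hy H.
  apply Rle_trans with (RInt f (y / 2) y); [|apply (Iinf_ge f K); auto; lra].
  replace (y / 2) with (y - y / 2) at 1 by field.
  apply RInt_ge_const; [lra|apply G; lra|]. intros h Hh. apply H; lra.
Qed.

Lemma RInt_qD_lower Ls rho D x : 0 < Ls -> 1 < rho -> 1 <= D -> 0 < x <= 1 ->
  pdf_low Ls x * / (rho * x + D) * (x / 2) <= RInt (qD Ls rho D) (x / 2) x.
Proof.
  intros HL Hr HD Hx.
  assert (N := qD_dominated Ls rho D HL ltac:(lra) HD).
  replace (x / 2) with (x - x / 2) at 1 by field.
  apply RInt_ge_const; [lra|apply (dom_pos_integrand _ _ _ N); lra|].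
  intros g Hg. unfold qD.
  assert (A := pdf_lower Ls x g HL Hx ltac:(lra)).
  assert (B : / (rho * x + D) <= / (rho * g + D)) by (apply Rinv_le_contravar; nra).
  assert (0 < / (rho * x + D)) by (apply Rinv_0_lt_compat; nra).
  assert (0 < pdf_low Ls x) by (apply pdf_low_pos; auto).
  apply Rmult_le_compat; lra.
Qed.

Definition cc1 (Lc Ls : R) := pdf_low Lc 1 * pdf_low Ls 1 / 4.

Lemma cc1_pos Lc Ls : 0 < Lc -> 0 < Ls -> 0 < cc1 Lc Ls.
Proof.
  intros. unfold cc1. assert (0 < pdf_low Lc 1) by (apply pdf_low_pos; auto).
  assert (0 < pdf_low Ls 1) by (apply pdf_low_pos; auto). apply Rdiv_lt_0_compat; [nra|lra].
Qed.

Lemma pdf_low_scale L y : pdf_low L y = pdf_low L 1 * Rpower y (L - 1).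
Proof. unfold pdf_low. rewrite Rpower_1_base. ring. Qed.

Section LowerBounds.
Variables (Lc Ls rho r : R).
Hypotheses (HLc : 0 < Lc) (HLs : 0 < Ls) (Hrho : 1 < rho) (Hr : 0 < r).

Let T1 : 1 < Tr rho r := Tr_gt1 rho r Hrho Hr.

Lemma phi_le_half x h : 1 / 2 <= h -> 4 * Tr rho r <= rho * rho * x -> phi rho r h <= x / 2.
Proof.
  intros Hh Hcond. unfold phi.
  replace (((Tr rho r - 1) / (rho * h) - 1) / rho)
    with ((Tr rho r - 1 - rho * h) / (rho * h * rho)) by (field; nra).
  apply Rle_div_l; nra.
Qed.

(** No outage whenever [H0 >= 1/2] and [Gamma0 >= x/2]. *)
Lemma O1_lower x : 0 < x <= 1 -> 4 * Tr rho r <= rho * rho * x ->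
  cc1 Lc Ls * Rpower x Ls / (rho * x + Tr rho r) <= Iinf (O1 Lc Ls rho r).
Proof.
  intros Hx Hcond.
  set (q := qD Ls rho (Tr rho r)).
  assert (N : power_dominated q (cst Ls) Ls) by (apply qD_dominated; lra).
  destruct (qD_int_bounded Ls rho (Tr rho r)) as [Kq Bq]; try lra.
  destruct (O1_int_bounded Lc Ls rho r) as [K B]; auto.
  set (A := pdf_low Lc 1).
  set (C := pdf_low Ls x * / (rho * x + Tr rho r) * (x / 2)).
  assert (HA : 0 < A) by (apply pdf_low_pos; auto).
  assert (HC : 0 <= C).
  { assert (0 < pdf_low Ls x) by (apply pdf_low_pos; auto).
    assert (0 < / (rho * x + Tr rho r)) by (apply Rinv_0_lt_compat; nra).
    unfold C. apply Rmult_le_pos; [|lra]. nra. }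
  apply Rle_trans with ((A * C) * (1 / 2)).
  - unfold A, C, cc1. rewrite (pdf_low_scale Ls x), (Rpower_succ x Ls) by lra.
    right. field. nra.
  - apply (Iinf_ge_box _ K); auto; [apply O1_pos_integrand; auto|lra|].
    intros h Hh. unfold O1. fold q.
    assert (V1 : RInt q (x / 2) x <= Iinf q - Gt q (phi rho r h))
      by (apply (Iinf_minus_Gt _ _ _ N Kq Bq); try lra; apply phi_le_half; lra).
    assert (V2 : C <= RInt q (x / 2) x) by (apply RInt_qD_lower; lra).
    assert (V3 : A <= gamma_pdf Lc (/ Lc) h) by (apply pdf_lower; lra).
    apply Rmult_le_compat; lra.
Qed.

(** Outage whenever [H0 <= y] and [Gamma0 <= x], provided [rho y (rho x + 1) <= rho^r - 1]. *)
Lemma O2_lower x y : 0 < x <= 1 -> 0 < y <= 1 -> rho * y * (rho * x + 1) <= Tr rho r - 1 ->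
  cc1 Lc Ls * Rpower x Ls * Rpower y Lc / (rho * x + 1) <= Iinf (O2 Lc Ls rho r).
Proof.
  intros Hx Hy Hcond.
  set (q := qD Ls rho 1).
  assert (N : power_dominated q (cst Ls) Ls) by (apply qD_dominated; lra).
  destruct (O2_int_bounded Lc Ls rho r) as [K B]; auto.
  set (A := pdf_low Lc y).
  set (C := pdf_low Ls x * / (rho * x + 1) * (x / 2)).
  assert (HA : 0 < A) by (apply pdf_low_pos; auto).
  assert (HC : 0 <= C).
  { assert (0 < pdf_low Ls x) by (apply pdf_low_pos; auto).
    assert (0 < / (rho * x + 1)) by (apply Rinv_0_lt_compat; nra).
    unfold C. apply Rmult_le_pos; [|lra]. nra. }
  apply Rle_trans with ((A * C) * (y / 2)).
  - unfold A, C, cc1. rewrite (pdf_low_scale Ls x), (pdf_low_scale Lc y),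
      (Rpower_succ x Ls), (Rpower_succ y Lc) by lra.
    right. field. nra.
  - apply (Iinf_ge_box _ K); auto; [apply O2_pos_integrand; auto|lra|].
    intros h Hh. unfold O2. fold q.
    assert (Hphi : x <= phi rho r h) by (apply phi_iff; nra).
    assert (V1 : RInt q (x / 2) (phi rho r h) <= Gt q (phi rho r h))
      by (apply (Gt_ge _ _ _ N); lra).
    assert (V2 : RInt q (x / 2) x <= RInt q (x / 2) (phi rho r h))
      by (apply RInt_subinterval; [apply (dom_pos_integrand _ _ _ N)|lra..]).
    assert (V3 : C <= RInt q (x / 2) x) by (apply RInt_qD_lower; lra).
    assert (V4 : A <= gamma_pdf Lc (/ Lc) h) by (apply pdf_lower; lra).
    apply Rmult_le_compat; lra.
Qed.

End LowerBounds.

Lemma O1_lower_pow Lc Ls r be : 0 < Lc -> 0 < Ls -> 0 < r -> 0 <= be <= 1 -> 0 < 2 - be - r ->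
  exists r0, 1 <= r0 /\ forall rho, r0 < rho ->
    cc1 Lc Ls / 2 * Rpower rho (- (Ls * be + Rmax (1 - be) r)) <= Iinf (O1 Lc Ls rho r).
Proof.
  intros Hc HL Hr Hb Hg.
  destruct (Rpower_eventually_gt 4 (2 - be - r) Hg ltac:(lra)) as [r0 [Hr0 P]].
  exists r0. split; auto. intros rho Hrho. specialize (P rho Hrho).
  assert (H1 : 1 < rho) by lra.
  set (x := Rpower rho (- be)). set (M := Rmax (1 - be) r).
  assert (Hx : 0 < x <= 1) by (split; [apply Rpower_pos| apply Rpower_le_1; lra]).
  assert (Ex : rho * x = Rpower rho (1 - be)).
  { unfold x. replace (1 - be) with (1 + - be) by ring. rewrite Rpower_plus, Rpower_1; lra. }
  assert (Hcond : 4 * Tr rho r <= rho * rho * x).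
  { replace (rho * rho * x) with (Rpower rho (2 - be - r) * Tr rho r).
    - assert (0 < Tr rho r) by apply Rpower_pos. nra.
    - unfold Tr. rewrite <- Rpower_plus.
      replace (2 - be - r + r) with (1 + (1 - be)) by ring.
      rewrite Rpower_plus, Rpower_1, <- Ex by lra. ring. }
  assert (D : rho * x + Tr rho r <= 2 * Rpower rho M).
  { assert (Rpower rho (1 - be) <= Rpower rho M) by (apply Rle_Rpower; [lra|apply Rmax_l]).
    assert (Tr rho r <= Rpower rho M) by (apply Rle_Rpower; [lra|apply Rmax_r]). lra. }
  eapply Rle_trans; [|apply (O1_lower _ _ _ _ Hc HL H1 Hr x); lra].
  assert (Hxp : Rpower x Ls = Rpower rho (- (Ls * be))) by (unfold x; rewrite Rpower_mult; f_equal; ring).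
  assert (HM : 0 < Rpower rho M) by apply Rpower_pos.
  assert (Hc1 := cc1_pos Lc Ls Hc HL).
  assert (0 < Rpower rho (- (Ls * be))) by apply Rpower_pos.
  assert (0 < Tr rho r) by apply Rpower_pos.
  rewrite Hxp. replace (- (Ls * be + M)) with (- (Ls * be) + - M) by ring.
  rewrite Rpower_plus, (Rpower_Ropp rho M).
  unfold Rdiv.
  replace (cc1 Lc Ls * / 2 * (Rpower rho (- (Ls * be)) * / Rpower rho M))
    with (cc1 Lc Ls * Rpower rho (- (Ls * be)) * / (2 * Rpower rho M)) by (field; lra).
  apply Rmult_le_compat_l; [nra|]. apply Rinv_le_contravar; nra.
Qed.

Lemma O2_box_value Lc Ls rho be al : 0 < Lc -> 0 < Ls -> 1 < rho -> 0 <= be <= 1 ->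
  cc1 Lc Ls * Rpower 4 (- Lc) / 2 * Rpower rho (- (Ls * be + Lc * al + (1 - be)))
  <= cc1 Lc Ls * Rpower (Rpower rho (- be)) Ls * Rpower (Rpower rho (- al) / 4) Lc
     / (rho * Rpower rho (- be) + 1).
Proof.
  intros Hc HL H1 Hb.
  assert (E1 : rho * Rpower rho (- be) = Rpower rho (1 - be)).
  { replace (1 - be) with (1 + - be) by ring. rewrite Rpower_plus, Rpower_1; lra. }
  assert (G1 : 1 <= Rpower rho (1 - be)) by (apply Rpower_ge_1; lra).
  assert (Hyp : Rpower (Rpower rho (- al) / 4) Lc = Rpower rho (- (Lc * al)) * Rpower 4 (- Lc)).
  { unfold Rdiv. rewrite <- Rpower_mult_distr, Rpower_mult, Rpower_inv_base, <- Rpower_Ropp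
      by (try apply Rpower_pos; lra).
    f_equal. f_equal. ring. }
  rewrite E1, Hyp, Rpower_mult.
  replace (- (Ls * be + Lc * al + (1 - be))) with (- be * Ls + - (Lc * al) + - (1 - be)) by ring.
  rewrite !Rpower_plus, (Rpower_Ropp rho (1 - be)).
  assert (Hc1 := cc1_pos Lc Ls Hc HL).
  assert (0 < Rpower rho (- be * Ls)) by apply Rpower_pos.
  assert (0 < Rpower rho (- (Lc * al))) by apply Rpower_pos.
  assert (0 < Rpower 4 (- Lc)) by apply Rpower_pos.
  unfold Rdiv.
  replace (cc1 Lc Ls * Rpower 4 (- Lc) * / 2 *
           (Rpower rho (- be * Ls) * Rpower rho (- (Lc * al)) * / Rpower rho (1 - be)))
    with (cc1 Lc Ls * Rpower rho (- be * Ls) * (Rpower rho (- (Lc * al)) * Rpower 4 (- Lc))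
          * / (2 * Rpower rho (1 - be))) by (field; lra).
  apply Rmult_le_compat_l.
  { left. apply Rmult_lt_0_compat; [apply Rmult_lt_0_compat|apply Rmult_lt_0_compat]; lra. }
  apply Rinv_le_contravar; lra.
Qed.

Lemma O2_lower_pow Lc Ls r be al : 0 < Lc -> 0 < Ls -> 0 < r -> 0 <= be <= 1 -> 0 <= al ->
  2 - al - be <= r ->
  exists r0, 1 <= r0 /\ forall rho, r0 < rho ->
    cc1 Lc Ls * Rpower 4 (- Lc) / 2 * Rpower rho (- (Ls * be + Lc * al + (1 - be)))
    <= Iinf (O2 Lc Ls rho r).
Proof.
  intros Hc HL Hr Hb Ha Hg.
  destruct (Rpower_eventually_gt 2 r Hr ltac:(lra)) as [r0 [Hr0 P]].
  exists r0. split; auto. intros rho Hrho. specialize (P rho Hrho).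
  assert (H1 : 1 < rho) by lra.
  set (x := Rpower rho (- be)). set (y := Rpower rho (- al) / 4).
  assert (Hx : 0 < x <= 1) by (split; [apply Rpower_pos| apply Rpower_le_1; lra]).
  assert (Hy : 0 < y <= 1).
  { unfold y. assert (0 < Rpower rho (- al)) by apply Rpower_pos.
    assert (Rpower rho (- al) <= 1) by (apply Rpower_le_1; lra). lra. }
  assert (E1 : rho * x = Rpower rho (1 - be)).
  { unfold x. replace (1 - be) with (1 + - be) by ring. rewrite Rpower_plus, Rpower_1; lra. }
  assert (G1 : 1 <= rho * x) by (rewrite E1; apply Rpower_ge_1; lra).
  assert (Hcond : rho * y * (rho * x + 1) <= Tr rho r - 1).
  { assert (A : rho * y * (2 * Rpower rho (1 - be)) = Rpower rho (2 - al - be) / 2).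
    { unfold y. replace (2 - al - be) with (1 + - al + (1 - be)) by ring.
      rewrite !Rpower_plus, Rpower_1 by lra. field. }
    assert (B : Rpower rho (2 - al - be) <= Tr rho r) by (apply Rle_Rpower; lra).
    assert (0 < rho * y) by (apply Rmult_lt_0_compat; lra).
    assert (rho * y * (rho * x + 1) <= rho * y * (2 * Rpower rho (1 - be)))
      by (apply Rmult_le_compat_l; lra).
    unfold Tr in *. lra. }
  eapply Rle_trans; [apply O2_box_value; auto|].
  apply (O2_lower _ _ _ _ Hc HL H1 Hr x y); lra.
Qed.

(** Exponents of the no-outage part ([e1]) and of the outage part ([e2]); the exponent
    of [ED_j] is their minimum [ee]. *)
Definition e1 (Ls r : R) := if Rlt_dec r 1 then r + (1 - r) * Rmin 1 Ls else r.
Definition e2 (Lc Ls r : R) :=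
  if Rlt_dec r 1 then Lc * (1 - r) + Rmin Ls (1 + Lc)
  else if Rle_dec Ls 1 then Ls else 1 + Rmin (Ls - 1) Lc * Rmax (2 - r) 0.
Definition ee (Lc Ls r : R) := Rmin (e1 Ls r) (e2 Lc Ls r).

Lemma e1_attained Ls r : 0 < r -> r < 2 ->
  exists be, 0 <= be <= 1 /\ 0 < 2 - be - r /\ Ls * be + Rmax (1 - be) r = e1 Ls r.
Proof.
  intros Hr Hr2. unfold e1. destruct (Rlt_dec r 1) as [r1|r1].
  - destruct (Rle_lt_dec 1 Ls) as [h|h].
    + exists 0. rewrite Rmin_left, Rmax_left by lra. repeat split; lra.
    + exists (1 - r). rewrite Rmin_right, Rmax_right by lra. repeat split; lra.
  - exists 0. rewrite Rmax_right by lra. repeat split; lra.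
Qed.

Lemma e2_attained Lc Ls r : 0 < Lc -> 0 < Ls -> 0 < r -> exists be al,
  0 <= be <= 1 /\ 0 <= al /\ 2 - al - be <= r /\ Ls * be + Lc * al + (1 - be) = e2 Lc Ls r.
Proof.
  intros Hc HL Hr. unfold e2. destruct (Rlt_dec r 1) as [r1|r1].
  - destruct (Rle_lt_dec Ls (1 + Lc)) as [h|h].
    + exists 1, (1 - r). rewrite Rmin_left by lra. repeat split; lra.
    + exists 0, (2 - r). rewrite Rmin_right by lra. repeat split; lra.
  - destruct (Rle_dec Ls 1) as [h|h]; [exists 1, 0; repeat split; lra|].
    destruct (Rle_lt_dec 2 r) as [h2|h2].
    + exists 0, 0. rewrite Rmax_right by lra. repeat split; lra.
    + rewrite Rmax_left by lra. destruct (Rle_lt_dec (Ls - 1) Lc) as [h3|h3].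
      * exists (2 - r), 0. rewrite Rmin_left by lra. repeat split; lra.
      * exists 0, (2 - r). rewrite Rmin_right by lra. repeat split; lra.
Qed.

Lemma e2_le_e1 Lc Ls r : 2 <= r -> e2 Lc Ls r <= e1 Ls r.
Proof.
  intros Hr. unfold e1, e2.
  destruct (Rlt_dec r 1); [lra|]. destruct (Rle_dec Ls 1); [lra|].
  rewrite Rmax_right by lra. lra.
Qed.

Lemma e1_approx Ls r d : 0 < Ls -> 0 < r -> 0 < d ->
  exists th, 0 <= th <= 1 /\ 0 < Ls - 1 + th /\ e1 Ls r - d <= th * r + 1 - th.
Proof.
  intros HL Hr Hd. unfold e1. destruct (Rlt_dec r 1) as [r1|r1]; [|exists 1; repeat split; lra].
  set (m := Rmin 1 Ls). assert (M1 := Rmin_l 1 Ls). assert (M2 := Rmin_r 1 Ls).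
  assert (Hm : 0 < m) by (apply Rmin_glb_lt; lra). fold m in M1, M2.
  assert (Hm' : m = 1 \/ m = Ls) by (unfold m, Rmin; destruct Rle_dec; auto).
  set (eta := Rmin d m / 2). assert (E1 := Rmin_l d m). assert (E2 := Rmin_r d m).
  assert (0 < Rmin d m) by (apply Rmin_glb_lt; lra).
  exists (1 - m + eta). unfold eta in *. repeat split; try lra.
  assert (Rmin d m / 2 * (1 - r) <= d) by nra. nra.
Qed.

Lemma e2_approx Lc Ls r d : 0 < Lc -> 0 < Ls -> 0 < r -> 0 < d ->
  exists ka la, 0 <= ka < Lc /\ 0 <= la < Ls /\ la <= 1 + ka /\ e2 Lc Ls r - d <= la - ka * (r - 1).
Proof.
  intros Hc HL Hr Hd. unfold e2. destruct (Rlt_dec r 1) as [r1|r1].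
  - set (eta := Rmin (d / 2) (Rmin (Lc / 2) (Ls / 2)) / 2).
    assert (A1 := Rmin_l (d / 2) (Rmin (Lc / 2) (Ls / 2))).
    assert (A2 := Rmin_r (d / 2) (Rmin (Lc / 2) (Ls / 2))).
    assert (A3 := Rmin_l (Lc / 2) (Ls / 2)). assert (A4 := Rmin_r (Lc / 2) (Ls / 2)).
    assert (0 < Rmin (d / 2) (Rmin (Lc / 2) (Ls / 2))) by (repeat apply Rmin_glb_lt; lra).
    assert (B1 := Rmin_l Ls (1 + Lc)). assert (B2 := Rmin_r Ls (1 + Lc)).
    assert (B3 : Rmin Ls (1 + Lc) = Ls \/ Rmin Ls (1 + Lc) = 1 + Lc)
      by (unfold Rmin; destruct Rle_dec; auto).
    exists (Lc - eta), (Rmin Ls (1 + Lc) - eta). unfold eta in *.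
    repeat split; try lra; nra.
  - destruct (Rle_dec Ls 1) as [h|h].
    + assert (A1 := Rmin_l d Ls). assert (A2 := Rmin_r d Ls).
      assert (0 < Rmin d Ls) by (apply Rmin_glb_lt; lra).
      exists 0, (Ls - Rmin d Ls / 2). repeat split; lra.
    + destruct (Rle_lt_dec 2 r) as [h2|h2].
      * exists 0, 1. rewrite Rmax_right by lra. repeat split; lra.
      * rewrite Rmax_left by lra.
        set (k := Rmin (Ls - 1) Lc). assert (K1 := Rmin_l (Ls - 1) Lc). assert (K2 := Rmin_r (Ls - 1) Lc).
        assert (Hk : 0 < k) by (apply Rmin_glb_lt; lra). fold k in K1, K2.
        set (eta := Rmin d k / 2). assert (E1 := Rmin_l d k). assert (E2 := Rmin_r d k).
        assert (0 < Rmin d k) by (apply Rmin_glb_lt; lra).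
        exists (k - eta), (1 + (k - eta)). unfold eta in *. repeat split; try lra. nra.
Qed.

Section Exponent.
Variables (Lc Ls r : R).
Hypotheses (HLc : 0 < Lc) (HLs : 0 < Ls) (Hr : 0 < r).

Lemma ED_lower : exists c rho0, 0 < c /\
  forall rho, rho0 < rho -> c * Rpower rho (- ee Lc Ls r) <= EDj Lc Ls rho (RJ rho r).
Proof.
  unfold ee. destruct (Rle_lt_dec (e2 Lc Ls r) (e1 Ls r)) as [Hle|Hlt].
  - rewrite Rmin_right by lra.
    destruct (e2_attained Lc Ls r HLc HLs Hr) as [be [al [Hb [Ha [Hg HE]]]]].
    destruct (O2_lower_pow Lc Ls r be al HLc HLs Hr Hb Ha Hg) as [r0 [Hr0 P]].
    exists (cc1 Lc Ls * Rpower 4 (- Lc) / 2), r0. split.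
    { assert (X := cc1_pos Lc Ls HLc HLs). assert (0 < Rpower 4 (- Lc)) by apply Rpower_pos.
      apply Rdiv_lt_0_compat; [nra|lra]. }
    intros rho Hrho. rewrite ED_split by lra. rewrite <- HE.
    assert (X := O1_nonneg Lc Ls rho r HLc HLs ltac:(lra) Hr). specialize (P rho Hrho). lra.
  - rewrite Rmin_left by lra.
    assert (Hr2 : r < 2) by (destruct (Rlt_le_dec r 2); auto; pose proof (e2_le_e1 Lc Ls r); lra).
    destruct (e1_attained Ls r Hr Hr2) as [be [Hb [Hg HE]]].
    destruct (O1_lower_pow Lc Ls r be HLc HLs Hr Hb Hg) as [r0 [Hr0 P]].
    exists (cc1 Lc Ls / 2), r0. split; [assert (X := cc1_pos Lc Ls HLc HLs); lra|].
    intros rho Hrho. rewrite ED_split by lra. rewrite <- HE.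
    assert (X := O2_nonneg Lc Ls rho r HLc HLs ltac:(lra) Hr). specialize (P rho Hrho). lra.
Qed.

Lemma ED_upper d : 0 < d -> exists C rho1, 0 < C /\
  forall rho, rho1 < rho -> EDj Lc Ls rho (RJ rho r) <= C * Rpower rho (- (ee Lc Ls r - d)).
Proof.
  intros Hd.
  destruct (e1_approx Ls r d HLs Hr Hd) as [th [Ht [Ht2 Ht3]]].
  destruct (e2_approx Lc Ls r d HLc HLs Hr Hd) as [ka [la [Hk [Hl [Hkl Hb]]]]].
  destruct (O1_upper Lc Ls th HLc HLs Ht Ht2) as [K1 [HK1 B1]].
  destruct (O2_upper Lc Ls ka la HLc HLs Hk Hl Hkl) as [K2 [HK2 B2]].
  exists (K1 + K2 + 1), 1. split; [lra|]. intros rho Hrho.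
  rewrite ED_split by lra.
  assert (I1 : Iinf (O1 Lc Ls rho r) <= K1 * Rpower rho (- (th * r + 1 - th)))
    by (apply Iinf_le; [apply O1_pos_integrand|apply B1]; auto).
  assert (I2 : Iinf (O2 Lc Ls rho r) <= K2 * Rpower rho (ka * (r - 1) - la))
    by (apply Iinf_le; [apply O2_pos_integrand|apply B2]; auto).
  assert (M1 := Rmin_l (e1 Ls r) (e2 Lc Ls r)). assert (M2 := Rmin_r (e1 Ls r) (e2 Lc Ls r)).
  fold (ee Lc Ls r) in M1, M2.
  set (P := Rpower rho (- (ee Lc Ls r - d))). assert (0 < P) by apply Rpower_pos.
  assert (P1 : Rpower rho (- (th * r + 1 - th)) <= P) by (apply Rle_Rpower; lra).
  assert (P2 : Rpower rho (ka * (r - 1) - la) <= P) by (apply Rle_Rpower; lra).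
  assert (K1 * Rpower rho (- (th * r + 1 - th)) <= K1 * P) by (apply Rmult_le_compat_l; lra).
  assert (K2 * Rpower rho (ka * (r - 1) - la) <= K2 * P) by (apply Rmult_le_compat_l; lra).
  lra.
Qed.

End Exponent.

Lemma lim_of_power_bounds (F : R -> R) e :
  (exists c rho0, 0 < c /\ forall rho, rho0 < rho -> c * Rpower rho (- e) <= F rho) ->
  (forall d, 0 < d -> exists C rho1, 0 < C /\
     forall rho, rho1 < rho -> F rho <= C * Rpower rho (- (e - d))) ->
  lim_infty (fun rho => - ln (F rho) / ln rho) e.
Proof.
  intros [c [r0 [Hc Lw]]] Up eps Heps.
  destruct (Up (eps / 2) ltac:(lra)) as [C [r1 [HC Upb]]].
  assert (A1 := Rabs_pos (ln c)). assert (A2 := Rabs_pos (ln C)).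
  set (B := 2 * (Rabs (ln c) + Rabs (ln C) + 1) / eps).
  assert (HB : B * eps = 2 * (Rabs (ln c) + Rabs (ln C) + 1)) by (unfold B; field; lra).
  set (M := Rmax (Rmax r0 r1) (Rmax 1 (exp B))).
  assert (X1 := Rmax_l (Rmax r0 r1) (Rmax 1 (exp B))). assert (X2 := Rmax_r (Rmax r0 r1) (Rmax 1 (exp B))).
  assert (X3 := Rmax_l r0 r1). assert (X4 := Rmax_r r0 r1).
  assert (X5 := Rmax_l 1 (exp B)). assert (X6 := Rmax_r 1 (exp B)).
  exists M. intros rho Hrho. fold M in X1, X2.
  assert (Hl : B < ln rho) by (rewrite <- (ln_exp B); apply ln_increasing; [apply exp_pos|lra]).
  specialize (Lw rho ltac:(lra)). specialize (Upb rho ltac:(lra)).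
  assert (P1 : 0 < c * Rpower rho (- e)) by (apply Rmult_lt_0_compat; auto; apply Rpower_pos).
  assert (Lo : ln c - e * ln rho <= ln (F rho)).
  { assert (H := ln_le _ _ P1 Lw). rewrite ln_mult, ln_Rpower in H by (try apply Rpower_pos; auto).
    lra. }
  assert (Hi : ln (F rho) <= ln C - (e - eps / 2) * ln rho).
  { assert (H := ln_le (F rho) _ ltac:(lra) Upb).
    rewrite ln_mult, ln_Rpower in H by (try apply Rpower_pos; auto). lra. }
  assert (Hlp : 0 < ln rho) by (assert (0 < B) by (apply Rmult_lt_reg_r with eps; lra); lra).
  assert (Q : Rabs (ln c) + Rabs (ln C) < eps / 2 * ln rho) by nra.
  assert (R1 := Rle_abs (ln c)). assert (R2 := Rabs_maj2 (ln c)).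
  assert (R3 := Rle_abs (ln C)). assert (R4 := Rabs_maj2 (ln C)).
  replace (- ln (F rho) / ln rho - e) with ((- ln (F rho) - e * ln rho) / ln rho) by (field; lra).
  apply Rabs_def1; [apply Rlt_div_l|apply Rlt_div_r]; nra.
Qed.

Lemma exponent_limit Lc Ls r : 0 < Lc -> 0 < Ls -> 0 < r ->
  lim_infty (exponent_fun Lc Ls r) (ee Lc Ls r).
Proof.
  intros Hc HL Hr. apply (lim_of_power_bounds (fun rho => EDj Lc Ls rho (RJ rho r))).
  - apply ED_lower; auto.
  - apply ED_upper; auto.
Qed.

Lemma lim_infty_unique f d d' : lim_infty f d -> lim_infty f d' -> d = d'.
Proof.
  intros H1 H2. apply Rminus_diag_uniq. apply Rabs_eq_0.
  destruct (Rle_lt_dec (Rabs (d - d')) 0) as [h|h]; [apply Rle_antisym; [exact h|apply Rabs_pos]|].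
  exfalso. set (e := Rabs (d - d') / 3).
  destruct (H1 e ltac:(unfold e; lra)) as [M1 P1].
  destruct (H2 e ltac:(unfold e; lra)) as [M2 P2].
  set (x := Rmax M1 M2 + 1). assert (X1 := Rmax_l M1 M2). assert (X2 := Rmax_r M1 M2).
  specialize (P1 x ltac:(unfold x; lra)). specialize (P2 x ltac:(unfold x; lra)).
  assert (Rabs (d - d') <= Rabs (f x - d) + Rabs (f x - d')).
  { replace (d - d') with (- (f x - d) + (f x - d')) by ring.
    eapply Rle_trans; [apply Rabs_triang|]. rewrite Rabs_Ropp. lra. }
  unfold e in *. lra.
Qed.

(** * Optimizing the exponent over the rate *)

Lemma Delta_j_le_1 Ls Lc : 0 < Lc -> Ls <= 1 ->
  Delta_j Ls Lc = (Lc + Ls - Ls * Ls) / (Lc + 1 - Ls).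
Proof.
  intros Hc HL. unfold Delta_j. destruct (Rle_dec Ls 1); [|lra]. field. lra.
Qed.

Lemma Delta_j_gt_1 Ls Lc : 0 < Lc -> 1 < Ls ->
  Delta_j Ls Lc = (1 + 2 * Rmin (Ls - 1) Lc) / (1 + Rmin (Ls - 1) Lc).
Proof.
  intros Hc HL. unfold Delta_j. destruct (Rle_dec Ls 1); [lra|].
  destruct (Rle_dec Ls (1 + Lc)).
  - rewrite Rmin_left by lra. field. lra.
  - rewrite Rmin_right by lra. field. lra.
Qed.

(** For [Ls <= 1]: [ee] is a [(Lc, 1 - Ls)]-weighted lower envelope of [e1] and [e2] whose
    weighted mean is constant, and both are equal at [r = Lc / (Lc + 1 - Ls)]. *)
Lemma ee_le_Delta_small Lc Ls r : 0 < Lc -> 0 < Ls <= 1 -> 0 < r ->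
  ee Lc Ls r * (Lc + 1 - Ls) <= Lc + Ls - Ls * Ls.
Proof.
  intros Hc HL Hr.
  assert (M1 := Rmin_l (e1 Ls r) (e2 Lc Ls r)). assert (M2 := Rmin_r (e1 Ls r) (e2 Lc Ls r)).
  fold (ee Lc Ls r) in M1, M2. unfold e1, e2 in M1, M2.
  destruct (Rlt_dec r 1) as [r1|r1].
  - rewrite Rmin_right in M1 by lra. rewrite Rmin_left in M2 by lra. nra.
  - destruct (Rle_dec Ls 1); [nra|lra].
Qed.

Lemma ee_attains_small Lc Ls : 0 < Lc -> 0 < Ls <= 1 ->
  exists r, 0 < r /\ ee Lc Ls r * (Lc + 1 - Ls) = Lc + Ls - Ls * Ls.
Proof.
  intros Hc HL. destruct (Rlt_le_dec Ls 1) as [h|h].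
  - set (D := Lc + 1 - Ls). assert (HD : 0 < D) by (unfold D; lra).
    exists (Lc / D). assert (R1 : Lc / D < 1) by (apply Rlt_div_l; unfold D; lra).
    split; [apply Rdiv_lt_0_compat; auto|].
    unfold ee, e1, e2. destruct (Rlt_dec (Lc / D) 1) as [_|n]; [|lra].
    rewrite (Rmin_right 1 Ls), (Rmin_left Ls) by lra.
    replace (Lc * (1 - Lc / D) + Ls) with (Lc / D + (1 - Lc / D) * Ls) by (unfold D; field; lra).
    rewrite Rmin_left by lra. unfold D. field. lra.
  - exists 1. split; [lra|]. replace Ls with 1 by lra.
    unfold ee, e1, e2. destruct (Rlt_dec 1 1); [lra|]. destruct (Rle_dec 1 1); [|lra].
    rewrite Rmin_left; lra.
Qed.

(** For [Ls > 1] the optimum [(1 + 2k)/(1 + k)], [k = min(Ls - 1, Lc)], is reached where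
    [e1 r = r] meets [e2 r = 1 + k (2 - r)]. *)
Lemma ee_le_Delta_large Lc Ls r k : 0 < Lc -> 1 < Ls -> 0 < r -> k = Rmin (Ls - 1) Lc ->
  ee Lc Ls r <= (1 + 2 * k) / (1 + k).
Proof.
  intros Hc HL Hr Hk.
  assert (K0 : 0 < k) by (rewrite Hk; apply Rmin_glb_lt; lra).
  set (Dl := (1 + 2 * k) / (1 + k)).
  assert (G1 : 1 <= Dl <= 2) by (split; [apply Rle_div_r|apply Rle_div_l]; lra).
  assert (G2 : 1 + k * (2 - Dl) = Dl) by (unfold Dl; field; lra).
  assert (M1 := Rmin_l (e1 Ls r) (e2 Lc Ls r)). assert (M2 := Rmin_r (e1 Ls r) (e2 Lc Ls r)).
  fold (ee Lc Ls r) in M1, M2. unfold e1, e2 in M1, M2. rewrite <- Hk in M2.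
  destruct (Rlt_dec r 1) as [r1|r1]; [rewrite Rmin_left in M1; lra|].
  destruct (Rle_dec Ls 1); [lra|].
  destruct (Rle_lt_dec r Dl) as [h|h]; [lra|].
  assert (Rmax (2 - r) 0 <= 2 - Dl) by (unfold Rmax; destruct Rle_dec; lra).
  assert (k * Rmax (2 - r) 0 <= k * (2 - Dl)) by (apply Rmult_le_compat_l; lra).
  lra.
Qed.

Lemma ee_attains_large Lc Ls k : 0 < Lc -> 1 < Ls -> k = Rmin (Ls - 1) Lc ->
  ee Lc Ls ((1 + 2 * k) / (1 + k)) = (1 + 2 * k) / (1 + k).
Proof.
  intros Hc HL Hk.
  assert (K0 : 0 < k) by (rewrite Hk; apply Rmin_glb_lt; lra).
  set (Dl := (1 + 2 * k) / (1 + k)).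
  assert (G1 : 1 <= Dl) by (apply Rle_div_r; lra).
  assert (G2 : Dl < 2) by (apply Rlt_div_l; lra).
  assert (G3 : 1 + k * (2 - Dl) = Dl) by (unfold Dl; field; lra).
  unfold ee, e1, e2. destruct (Rlt_dec Dl 1); [lra|]. destruct (Rle_dec Ls 1); [lra|].
  rewrite <- Hk, Rmax_left, G3 by lra. apply Rmin_left. lra.
Qed.

Lemma ee_le_Delta Lc Ls r : 0 < Lc -> 0 < Ls -> 0 < r -> ee Lc Ls r <= Delta_j Ls Lc.
Proof.
  intros Hc HL Hr. destruct (Rle_lt_dec Ls 1) as [h|h].
  - rewrite Delta_j_le_1 by auto. apply Rle_div_r; [lra|]. apply ee_le_Delta_small; lra.
  - rewrite Delta_j_gt_1 by auto. apply ee_le_Delta_large; auto.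
Qed.

Lemma ee_attains_Delta Lc Ls : 0 < Lc -> 0 < Ls -> exists r, 0 < r /\ ee Lc Ls r = Delta_j Ls Lc.
Proof.
  intros Hc HL. destruct (Rle_lt_dec Ls 1) as [h|h].
  - destruct (ee_attains_small Lc Ls Hc ltac:(lra)) as [r [Hr E]].
    exists r. split; auto. rewrite Delta_j_le_1, <- E by auto. field. lra.
  - set (k := Rmin (Ls - 1) Lc). assert (K0 : 0 < k) by (apply Rmin_glb_lt; lra).
    exists ((1 + 2 * k) / (1 + k)). split; [apply Rdiv_lt_0_compat; lra|].
    rewrite Delta_j_gt_1 by auto. apply ee_attains_large; auto.
Qed.

Theorem lemma9 (Lc Ls : R) (hLc : 0 < Lc) (hLs : 0 < Ls) :
  (forall r : R, 0 < r -> exists d : R, lim_infty (exponent_fun Lc Ls r) d) /\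
  is_lub (fun d => exists r : R, 0 < r /\ lim_infty (exponent_fun Lc Ls r) d)
         (Delta_j Ls Lc).
Proof.
  split; [|split].
  - intros r Hr. exists (ee Lc Ls r). apply exponent_limit; auto.
  - intros d [r [Hr H]].
    rewrite (lim_infty_unique _ _ _ H (exponent_limit Lc Ls r hLc hLs Hr)).
    apply ee_le_Delta; auto.
  - intros b Hb. destruct (ee_attains_Delta Lc Ls hLc hLs) as [r [Hr E]].
    apply Hb. exists r. split; auto. rewrite <- E. apply exponent_limit; auto.
Qed.
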